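(* Let $n \geq 0$ and $k \geq 1$ be integers. Let $\mathcal{H}$ be a separable infinite-dimensional complex Hilbert space with orthonormal basis $\{e_m\}_{m\geq 1}$. For $j\ge 0$ let $P_j$ be the orthogonal projection onto $\mathrm{span}\{e_1,\dots,e_j\}$ (with $P_0=0$), and let $S_k$ be the unilateral shift of multiplicity $k$, $S_k e_m = e_{m+k}$ for $m\geq 1$. Fix scalars $x^i_j\in\mathbb{C}$ for $1\le i\le n$, $1\le j\le n+k$, and define the finite rank operator $F$ by $$F(e_i)=x_1^ie_1+\cdots+x_{i+k-1}^ie_{i+k-1}+(x_{i+k}^i-1)e_{i+k}+x_{i+k+1}^ie_{i+k+1}+\cdots+x_{n+k}^ie_{n+k}\ \ (1\le i\le n),\qquad F(e_i)=0\ \ (i\geq n+1).$$ Set $F_1=F+S_kP_n$ and, for $r\geq 2$, $F_r=F_1^r+\sum_{j=1}^{r-1}S_k^{j}(I-P_n)F_1^{r-j}$. Let $T=S_k+F$, and assume that $T$ is a completely non-unitary contraction with finite-dimensional defect spaces such that $\mathcal{D}_T\subseteq\mathcal{D}_{T^*}$, $\dim\mathcal{D}_T=n$ and $\dim(\mathcal{D}_{T^*}\ominus\mathcal{D}_T)=k$. Then: (1) $\mathrm{rank}(P_n-F_1^*F_1)=n$; (2) $F_1(I-P_n)=(I-P_{n+k})F_1=0$; (3) there exists $\lambda\geq 0$ such that $\lambda\|F_1^*x\|^2-\|F_1x\|^2\leq \lambda \|P_{n+k} x\|^2-\|P_n x\|^2$ for all $x\in \mathcal{H}$; (4) for all $r\geq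 1$ and all $x\in\mathcal{H}$, $\|F_rx\|\leq \|P_n x\|$ and $\|F_r^*x\|\leq \|P_{n+kr}x\|$; moreover, the only $x\in\mathcal{H}$ satisfying $\|F_rx\|=\|P_nx\|$ and $\|F_r^*x\|=\|P_{n+kr}x\|$ for all $r\geq 1$ is $x=0$.
   Context: For a contraction $T$ (i.e. $\|T\|\le 1$) on a Hilbert space $\mathcal{H}$, the defect operators are $D_T=(I-T^*T)^{1/2}$ and $D_{T^*}=(I-TT^* )^{1/2}$, and the defect spaces are $\mathcal{D}_T=\overline{D_T\mathcal{H}}$ and $\mathcal{D}_{T^*}=\overline{D_{T^*}\mathcal{H}}$. A contraction $T$ is completely non-unitary (c.n.u.) if there is no nonzero closed subspace $\mathcal{M}$ reducing $T$ such that $T|_{\mathcal{M}}$ is unitary. *)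

(* The separable infinite-dimensional Hilbert space H is modelled concretely
   as l^2(N, C): vectors are sequences u : nat -> C with sum |u p|^2 < oo.
   Coordinate p (0-based) is the coefficient of the paper's basis vector
   e_(p+1). Operators are maps vec -> vec; only their behaviour on l^2
   vectors matters. *)
From Stdlib Require Import Reals ClassicalEpsilon Arith.
From Coquelicot Require Import Coquelicot.

Definition vec := nat -> C.
Definition op := vec -> vec.

Definition vzero : vec := fun _ => RtoC 0.
Definition vadd (u v : vec) : vec := fun p => Cplus (u p) (v p).
Definition vsub (u v : vec) : vec := fun p => Cminus (u p) (v p).
Definition vscal (c : C) (u : vec) : vec := fun p => Cmult c (u p).

Fixpoint csum (n : nat) (f : nat -> C) : C :=
  match n with O => RtoC 0 | S m => Cplus (csum m f) (f m) end.
Definition vsum (n : nat) (f : nat -> vec) : vec := fun p => csum n (fun i => f i p).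

Definition l2 (u : vec) : Prop := ex_series (fun p => (Cmod (u p) ^ 2)%R).
Definition hnorm (u : vec) : R := sqrt (Series (fun p => (Cmod (u p) ^ 2)%R)).
Definition inner (u v : vec) : C :=
  (Series (fun p => Re (Cmult (u p) (Cconj (v p)))),
   Series (fun p => Im (Cmult (u p) (Cconj (v p))))).

Definition lin_on_l2 (A : op) : Prop :=
  forall (a b : C) u v, l2 u -> l2 v ->
    A (vadd (vscal a u) (vscal b v)) = vadd (vscal a (A u)) (vscal b (A v)).

Definition is_adjoint (A B : op) : Prop :=
  (forall u, l2 u -> l2 (B u)) /\
  (forall u v, l2 u -> l2 v -> inner (A u) v = inner u (B v)).
Definition adj (A : op) : op := epsilon (inhabits (fun u => u)) (is_adjoint A).

Definition is_pos_sqrt (A D : op) : Prop :=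
  (forall u, l2 u -> l2 (D u)) /\ lin_on_l2 D /\
  (exists M : R, forall u, l2 u -> (hnorm (D u) <= M * hnorm u)%R) /\
  (forall u v, l2 u -> l2 v -> inner (D u) v = inner u (D v)) /\
  (forall u, l2 u -> (0 <= Re (inner (D u) u))%R) /\
  (forall u, l2 u -> D (D u) = A u).
Definition sqrt_op (A : op) : op := epsilon (inhabits (fun u => u)) (is_pos_sqrt A).

Definition range (A : op) : vec -> Prop := fun y => exists u, l2 u /\ y = A u.
Definition closure (S : vec -> Prop) : vec -> Prop := fun x =>
  l2 x /\ forall eps : R, (0 < eps)%R -> exists y, S y /\ (hnorm (vsub x y) < eps)%R.
Definition subsp (M N : vec -> Prop) : Prop := forall x, M x -> N x.
Definition ominus (M N : vec -> Prop) : vec -> Prop := fun x =>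
  M x /\ forall y, N y -> inner x y = RtoC 0.

Definition has_dim (M : vec -> Prop) (d : nat) : Prop :=
  exists v : nat -> vec,
    (forall i, (i < d)%nat -> M (v i)) /\
    (forall c : nat -> C, vsum d (fun i => vscal (c i) (v i)) = vzero ->
       forall i, (i < d)%nat -> c i = RtoC 0) /\
    (forall x, M x -> exists c : nat -> C, x = vsum d (fun i => vscal (c i) (v i))).

Definition closed_subspace (M : vec -> Prop) : Prop :=
  (forall x, M x -> l2 x) /\ M vzero /\
  (forall x y, M x -> M y -> M (vadd x y)) /\
  (forall c x, M x -> M (vscal c x)) /\
  (forall x, closure M x -> M x).

Definition contraction (T : op) : Prop :=
  (forall u, l2 u -> l2 (T u)) /\ lin_on_l2 T /\
  (forall u, l2 u -> (hnorm (T u) <= hnorm u)%R).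
Definition defect_op (T : op) : op := sqrt_op (fun u => vsub u (adj T (T u))).
Definition defect_op_star (T : op) : op := sqrt_op (fun u => vsub u (T (adj T u))).
Definition defect_sp (T : op) : vec -> Prop := closure (range (defect_op T)).
Definition defect_sp_star (T : op) : vec -> Prop := closure (range (defect_op_star T)).

Definition reducing_unitary (T : op) (M : vec -> Prop) : Prop :=
  (forall x, M x -> M (T x) /\ M (adj T x)) /\
  (forall x, M x -> adj T (T x) = x /\ T (adj T x) = x).
Definition cnu (T : op) : Prop :=
  forall M, closed_subspace M -> reducing_unitary T M -> forall x, M x -> x = vzero.

Definition Pj (j : nat) : op := fun u p => if Nat.ltb p j then u p else RtoC 0.
Definition Sk (k : nat) : op := fun u p => if Nat.ltb p k then RtoC 0 else u (p - k)%nat.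
(* X i j = x^i_j (1-based indices, 1 <= i <= n, 1 <= j <= n+k);
   F e_i = sum_j x^i_j e_j - e_(i+k) for 1 <= i <= n, F e_i = 0 for i > n *)
Definition Fop (n k : nat) (X : nat -> nat -> C) : op := fun u p =>
  if Nat.ltb p (n + k) then
    csum n (fun i => Cmult (u i)
      (Cminus (X (S i) (S p)) (if Nat.eqb p (i + k) then RtoC 1 else RtoC 0)))
  else RtoC 0.
Definition F1op (n k : nat) X : op := fun u => vadd (Fop n k X u) (Sk k (Pj n u)).
Definition Frop (n k : nat) X (r : nat) : op := fun u =>
  vadd (Nat.iter r (F1op n k X) u)
       (vsum (r - 1) (fun j' =>
          Nat.iter (S j') (Sk k)
            (vsub (Nat.iter (r - S j') (F1op n k X) u)
                  (Pj n (Nat.iter (r - S j') (F1op n k X) u))))).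
Definition Top (n k : nat) X : op := fun u => vadd (Sk k u) (Fop n k X u).

From Stdlib Require Import Reals ClassicalEpsilon Classical Arith Lia Lra FunctionalExtensionality.
From Coquelicot Require Import Coquelicot.
From mathcomp Require all_boot all_order all_algebra complex Rstruct.

(* Since T = S_k + F is the shift beyond the first n coordinates and an (n+k) x n
   matrix on them, I - T*T and I - TT* are finite hermitian matrices G and G_* of
   sizes n and n+k, positive semidefinite because T is a contraction.  Their square
   roots D_T, D_T* are again finite matrices, so the defect spaces consist of vectors
   supported on the first n (resp. n+k) coordinates and orthogonal to ker G
   (resp. ker G_* ); the dimension hypotheses therefore make G and G_* definite.
   Then P_n - F_1*F_1 = G gives (1), G_* >= c I gives (3) with lambda = 1/c, and
   F_r = T^r P_n, F_r* = P_n T*^r give the bounds in (4).  In the equality case, if x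
   vanishes below n + kr then F_(r+1)* x = F_1* y for the shift y of x by kr, and
   ||F_1* y|| = ||P_(n+k) y|| puts y in ker G_*, so x vanishes below n + k(r+1). *)

(** * Finite sums and quadratic forms *)

Fixpoint rsum (n : nat) (f : nat -> R) : R :=
  match n with O => 0%R | S m => (rsum m f + f m)%R end.

Definition qform (N : nat) (g : nat -> nat -> C) (u : vec) : C :=
  csum N (fun p => Cmult (csum N (fun q => Cmult (g p q) (u q))) (Cconj (u p))).
Definition is_hermitian (N : nat) (g : nat -> nat -> C) : Prop :=
  forall p q, (p < N)%nat -> (q < N)%nat -> g q p = Cconj (g p q).
Definition is_psd (N : nat) (g : nat -> nat -> C) : Prop :=
  forall u, (0 <= Re (qform N g u))%R.
Definition is_definite (N : nat) (g : nat -> nat -> C) : Prop :=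
  forall u, Re (qform N g u) = 0%R -> forall p, (p < N)%nat -> u p = RtoC 0.

Section FiniteSums.
Local Open Scope C_scope.

Lemma csum_ext n (f g : nat -> C) : (forall i, (i < n)%nat -> f i = g i) -> csum n f = csum n g.
Proof. induction n; simpl; intros H; auto. rewrite IHn by (intros; apply H; lia). rewrite H by lia. auto. Qed.

Lemma csum_plus n (f g : nat -> C) : csum n (fun i => f i + g i) = csum n f + csum n g.
Proof. induction n; simpl. ring. rewrite IHn. ring. Qed.

Lemma csum_opp n (f : nat -> C) : csum n (fun i => - f i) = - csum n f.
Proof. induction n; simpl. ring. rewrite IHn. ring. Qed.

Lemma csum_minus n (f g : nat -> C) : csum n (fun i => f i - g i) = csum n f - csum n g.
Proof. induction n; simpl. ring. rewrite IHn. ring. Qed.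

Lemma csum_scal_l n (c : C) (f : nat -> C) : csum n (fun i => c * f i) = c * csum n f.
Proof. induction n; simpl. ring. rewrite IHn. ring. Qed.

Lemma csum_scal_r n (c : C) (f : nat -> C) : csum n (fun i => f i * c) = csum n f * c.
Proof. induction n; simpl. ring. rewrite IHn. ring. Qed.

Lemma csum_zero n (f : nat -> C) : (forall i, (i < n)%nat -> f i = 0) -> csum n f = 0.
Proof. induction n; simpl; intros H; auto. rewrite IHn by (intros; apply H; lia). rewrite H by lia. ring. Qed.

Lemma csum_swap n m (f : nat -> nat -> C) :
  csum n (fun i => csum m (fun j => f i j)) = csum m (fun j => csum n (fun i => f i j)).
Proof.
induction n; simpl. symmetry; apply csum_zero; auto.
rewrite IHn, <- csum_plus. reflexivity.
Qed.

Lemma csum_split a b (f : nat -> C) : csum (a + b) f = csum a f + csum b (fun i => f (a + i)%nat).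
Proof.
induction b; simpl. rewrite Nat.add_0_r. ring.
rewrite Nat.add_succ_r. simpl. rewrite IHb. ring.
Qed.

Lemma csum_conj n (f : nat -> C) : Cconj (csum n f) = csum n (fun i => Cconj (f i)).
Proof.
induction n; simpl. apply injective_projections; simpl; lra.
rewrite Cplus_conj, IHn. auto.
Qed.

Lemma csum_delta n p (a : nat -> C) : (p < n)%nat ->
  csum n (fun q => if Nat.eqb q p then a q else 0) = a p.
Proof.
induction n; intros H; simpl. lia.
destruct (Nat.eq_dec p n).
- subst. rewrite Nat.eqb_refl, csum_zero. ring.
  intros i Hi. destruct (Nat.eqb_spec i n); auto; lia.
- rewrite IHn by lia. destruct (Nat.eqb_spec n p). lia. ring.
Qed.

Lemma re_csum n (f : nat -> C) : Re (csum n f) = rsum n (fun i => Re (f i)).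
Proof. induction n; simpl; auto. rewrite <- IHn; auto. Qed.

Lemma im_csum n (f : nat -> C) : Im (csum n f) = rsum n (fun i => Im (f i)).
Proof. induction n; simpl; auto. rewrite <- IHn; auto. Qed.

End FiniteSums.

Section RealSums.
Local Open Scope R_scope.

Lemma rsum_ext n f g : (forall i, (i < n)%nat -> f i = g i) -> rsum n f = rsum n g.
Proof. induction n; simpl; intros H; auto. rewrite IHn by (intros; apply H; lia). rewrite H by lia. auto. Qed.

Lemma rsum_le n f g : (forall i, (i < n)%nat -> f i <= g i) -> rsum n f <= rsum n g.
Proof.
induction n; simpl; intros H. lra.
assert (f n <= g n) by (apply H; lia).
assert (rsum n f <= rsum n g) by (apply IHn; intros; apply H; lia). lra.
Qed.

Lemma rsum_nonneg n f : (forall i, (i < n)%nat -> 0 <= f i) -> 0 <= rsum n f.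
Proof.
induction n; simpl; intros H. lra.
assert (0 <= f n) by (apply H; lia).
assert (0 <= rsum n f) by (apply IHn; intros; apply H; lia). lra.
Qed.

Lemma rsum_split a b f : rsum (a + b) f = rsum a f + rsum b (fun i => f (a + i)%nat).
Proof.
induction b; simpl. rewrite Nat.add_0_r. ring.
rewrite Nat.add_succ_r. simpl. rewrite IHb. ring.
Qed.

Lemma rsum_zero n f : (forall i, (i < n)%nat -> f i = 0) -> rsum n f = 0.
Proof. induction n; simpl; intros H; auto. rewrite IHn by (intros; apply H; lia). rewrite H by lia. ring. Qed.

Lemma rsum_scal n c f : rsum n (fun i => c * f i) = c * rsum n f.
Proof. induction n; simpl. ring. rewrite IHn. ring. Qed.

Lemma rsum_term n f i : (forall j, (j < n)%nat -> 0 <= f j) -> (i < n)%nat -> f i <= rsum n f.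
Proof.
intros H Hi. replace n with (S i + (n - S i))%nat by lia. rewrite rsum_split. simpl.
assert (0 <= rsum i f) by (apply rsum_nonneg; intros; apply H; lia).
assert (0 <= rsum (n - S i) (fun j => f (S (i + j)))) by (apply rsum_nonneg; intros; apply H; lia).
lra.
Qed.

Lemma rsum_mono n m f : (n <= m)%nat -> (forall j, 0 <= f j) -> rsum n f <= rsum m f.
Proof.
intros H Hf. replace m with (n + (m - n))%nat by lia. rewrite rsum_split.
assert (0 <= rsum (m - n) (fun i => f (n + i)%nat)) by (apply rsum_nonneg; auto). lra.
Qed.

Lemma rsum_eq0_terms N f : (forall i, (i < N)%nat -> 0 <= f i) -> rsum N f = 0 ->
  forall i, (i < N)%nat -> f i = 0.
Proof. intros H H0 i Hi. pose proof (rsum_term N f i H Hi). pose proof (H i Hi). lra. Qed.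

End RealSums.

(** * Square roots and coercivity of hermitian matrices *)

Module HermitianMatrix.
Import all_boot all_order all_algebra complex Rstruct.
Import GRing.Theory Num.Theory Order.TTheory.
Local Open Scope ring_scope.
Local Open Scope sesquilinear_scope.
Local Set Implicit Arguments.
Local Unset Strict Implicit.

Notation K := (complex Rdefinitions.R).

Lemma row_kernel_nontrivial N (W : 'M[K]_(N.+1, N)) : exists2 c : 'rV_(N.+1), c != 0 & c *m W = 0.
Proof.
exists (nz_row (kermx W)); last by apply/sub_kermxP; apply: nz_row_sub.
rewrite nz_row_eq0 -mxrank_eq0 mxrank_ker -lt0n subn_gt0.
by rewrite (leq_ltn_trans (rank_leq_col W)).
Qed.

Lemma quad_diag N (v d : 'rV[K]_N) :
  (v *m diag_mx d *m v ^t*) 0 0 = \sum_j v 0 j * d 0 j * (v 0 j)^*.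
Proof. by rewrite mul_mx_diag !mxE; apply: eq_bigr => j _; rewrite !mxE. Qed.

Lemma quad_delta N (d : 'rV[K]_N) (j : 'I_N) :
  ((delta_mx 0 j : 'rV_N) *m diag_mx d *m (delta_mx 0 j : 'rV_N) ^t*) 0 0 = d 0 j.
Proof.
rewrite quad_diag (bigD1 j) //= big1 ?addr0.
  by rewrite !mxE !eqxx /= mul1r conjC1 mulr1.
by move=> i /negbTE hij; rewrite !mxE hij /= !mul0r.
Qed.

Lemma quad_conj N (A P : 'M[K]_N) (u : 'rV[K]_N) :
  u *m (P ^t* *m A *m P) *m u ^t* = (u *m P ^t*) *m A *m (u *m P ^t*) ^t*.
Proof. by rewrite trmx_mul map_mxM trmxCK !mulmxA. Qed.

Lemma hermitian_spectral N (A : 'M[K]_N) : A ^t* = A ->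
  exists P : 'M[K]_N, exists d : 'rV[K]_N,
    [/\ P *m P ^t* = 1%:M, P ^t* *m P = 1%:M & A = P ^t* *m diag_mx d *m P].
Proof.
move=> hA.
have /orthomx_spectralP eqA : A \is normalmx by apply/normalmxP; rewrite hA.
exists (spectralmx A), (spectral_diag A).
have U := spectral_unitarymx A.
have h1 : spectralmx A *m (spectralmx A) ^t* = 1%:M by apply/unitarymxP.
by split => //; [apply: mulmx1C | rewrite -invmx_unitary].
Qed.

Lemma spectral_diag_ge0 N (A P : 'M[K]_N) (d : 'rV[K]_N) :
  P *m P ^t* = 1%:M -> A = P ^t* *m diag_mx d *m P ->
  (forall u : 'rV_N, 0 <= (u *m A *m u ^t*) 0 0) -> forall j, 0 <= d 0 j.
Proof.
move=> h1 eA hpsd j; have := hpsd ((delta_mx 0 j : 'rV_N) *m P).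
by rewrite eA quad_conj !mulmxtVK ?quad_delta //; apply/unitarymxP.
Qed.

Lemma psd_sqrtmx N (A : 'M[K]_N) : A ^t* = A ->
  (forall u : 'rV_N, 0 <= (u *m A *m u ^t*) 0 0) ->
  exists Q : 'M[K]_N, [/\ Q ^t* = Q, (forall u : 'rV_N, 0 <= (u *m Q *m u ^t*) 0 0)
     & Q *m Q = A].
Proof.
move=> hA hpsd.
have [P [d [h1 h2 eA]]] := hermitian_spectral hA.
have dge0 := spectral_diag_ge0 h1 eA hpsd.
pose s : 'rV[K]_N := \row_j sqrtC (d 0 j).
exists (P ^t* *m diag_mx s *m P); split.
- rewrite !trmx_mul !map_mxM trmxCK tr_diag_mx mulmxA; congr (_ *m _ *m _).
  apply/matrixP => i j; rewrite !mxE.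
  by case: (i == j); rewrite /= ?mulr1n ?mulr0n ?conjC0 // geC0_conj // sqrtC_ge0.
- move=> u; rewrite quad_conj quad_diag; apply: sumr_ge0 => j _.
  by rewrite mulrAC mulr_ge0 // ?mul_conjC_ge0 // mxE sqrtC_ge0.
- have U : P \is unitarymx by apply/unitarymxP.
  rewrite eA !mulmxA mulmxtVK // -(mulmxA (P ^t*) (diag_mx s)) mulmx_diag.
  congr (_ *m _ *m _); congr (diag_mx _).
  by apply/rowP => j; rewrite !mxE -expr2 sqrtCK.
Qed.

Lemma pd_coercive N (A : 'M[K]_N) : A ^t* = A ->
  (forall u : 'rV_N, 0 <= (u *m A *m u ^t*) 0 0) ->
  (forall u : 'rV_N, (u *m A *m u ^t*) 0 0 = 0 -> u = 0) ->
  exists2 c : K, 0 < c & forall u : 'rV_N, c * (u *m u ^t*) 0 0 <= (u *m A *m u ^t*) 0 0.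
Proof.
move=> hA hpsd hdef.
have [P [d [h1 h2 eA]]] := hermitian_spectral hA.
have U : P \is unitarymx by apply/unitarymxP.
have dgt0 : forall j, 0 < d 0 j.
  move=> j; rewrite lt_def (spectral_diag_ge0 h1 eA hpsd) andbT; apply/negP => /eqP hz.
  have := hdef ((delta_mx 0 j : 'rV_N) *m P).
  rewrite eA quad_conj !mulmxtVK ?quad_delta // => /(_ hz) /(congr1 (mulmx^~ (P ^t*))).
  rewrite -mulmxA h1 mulmx1 mul0mx => /matrixP /(_ 0 j); rewrite !mxE !eqxx /=.
  by move/eqP; rewrite oner_eq0.
(* c^-1 = 1 + sum_j d_j^-1 exceeds every d_j^-1, so c <= d_j for all j *)
pose c : K := (1 + \sum_j (d 0 j)^-1)^-1.
have Sge0 : 0 <= \sum_j (d 0 j)^-1 by apply: sumr_ge0 => j _; rewrite invr_ge0 ltW.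
exists c => [|u]; first by rewrite invr_gt0 ltr_pwDl.
have -> : u *m u ^t* = (u *m P ^t*) *m 1%:M *m (u *m P ^t*) ^t*.
  by rewrite mulmx1 trmx_mul map_mxM trmxCK mulmxA -(mulmxA u) h2 mulmx1.
rewrite eA quad_conj -diag_const_mx quad_diag quad_diag mulr_sumr.
apply: ler_sum => j _; rewrite !mxE /=.
set a := \sum_(j0 < N) _.
rewrite mulr1 (mulrAC a) [_ * d 0 j]mulrC.
apply: ler_wpM2r; first exact: mul_conjC_ge0.
rewrite /c -[d 0 j]invrK lef_pV2 ?posrE ?invr_gt0 ?ltr_pwDl ?dgt0 //.
apply: ler_wpDl => //; rewrite (bigD1 j) //= ler_wpDr //.
by apply: sumr_ge0 => i _; rewrite invr_ge0 ltW.
Qed.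

Definition ofC (c : C) : K := Complex (fst c) (snd c).
Definition toC (z : K) : C := (complex.Re z, complex.Im z).

Lemma ofC_add a b : ofC (Cplus a b) = ofC a + ofC b. Proof. by []. Qed.
Lemma ofC_mul a b : ofC (Cmult a b) = ofC a * ofC b. Proof. by []. Qed.
Lemma ofC_conj a : ofC (Cconj a) = (ofC a)^*. Proof. by []. Qed.
Lemma ofC_0 : ofC (RtoC 0) = 0. Proof. by []. Qed.
Lemma ofCK c : toC (ofC c) = c. Proof. by case: c. Qed.
Lemma toCK z : ofC (toC z) = z. Proof. by case: z. Qed.
Lemma ofC_inj a b : ofC a = ofC b -> a = b.
Proof. by move=> h; rewrite -(ofCK a) h ofCK. Qed.

Lemma ofC_csum n f : ofC (csum n f) = \sum_(i < n) ofC (f i).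
Proof.
elim: n => [|n IH] /=; first by rewrite big_ord0.
by rewrite ofC_add IH big_ord_recr.
Qed.

Definition extend N (f : 'I_N -> K) (p : nat) : K :=
  if @insub nat (fun x => (x < N)%N) 'I_N p is Some i then f i else 0.
Lemma extend_val N (f : 'I_N -> K) (i : 'I_N) : extend f i = f i.
Proof. by rewrite /extend valK. Qed.

Definition mx_of N (g : nat -> nat -> C) : 'M[K]_N := \matrix_(i < N, j < N) ofC (g i j).
(* the quadratic form u* g u is r g r* for the row r = u* *)
Definition row_of N (u : vec) : 'rV[K]_N := \row_(j < N) ofC (Cconj (u j)).
Definition vec_of N (r : 'rV[K]_N) : vec := fun p => toC ((extend (fun j => r 0 j) p)^*).

Lemma row_ofK N (r : 'rV[K]_N) : row_of N (vec_of r) = r.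
Proof. by apply/rowP => j; rewrite !mxE ofC_conj toCK extend_val conjCK. Qed.

Lemma qform_mx N g u : ofC (qform N g u) = (row_of N u *m mx_of N g *m (row_of N u)^t*) 0 0.
Proof.
rewrite /qform ofC_csum !mxE.
under eq_bigr do rewrite ofC_mul ofC_csum mulr_suml.
under [RHS]eq_bigr do rewrite !mxE mulr_suml.
rewrite exchange_big; apply: eq_bigr => p _; apply: eq_bigr => q _.
by rewrite !mxE ofC_mul !ofC_conj conjCK mulrC mulrA.
Qed.

Lemma row_of_self N u : (row_of N u *m (row_of N u)^t*) 0 0 =
  ofC (csum N (fun p => Cmult (u p) (Cconj (u p)))).
Proof.
rewrite ofC_csum !mxE; apply: eq_bigr => j _.
by rewrite !mxE ofC_mul !ofC_conj conjCK mulrC.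
Qed.

Lemma mx_of_hermitian N g : is_hermitian N g -> (mx_of N g)^t* = mx_of N g.
Proof. by move=> H; apply/matrixP => i j; rewrite !mxE -ofC_conj -H //; apply/ssrnat.ltP. Qed.

Lemma quad_self_adjoint N (A : 'M[K]_N) (r : 'rV[K]_N) : A^t* = A ->
  ((r *m A *m r^t*) 0 0)^* = (r *m A *m r^t*) 0 0.
Proof.
move=> hA; have e : (r *m A *m r^t*)^t* = r *m A *m r^t*.
  by rewrite !trmx_mul !map_mxM trmxCK hA mulmxA.
by rewrite -{2}e !mxE.
Qed.

Lemma ge0_self_conj (z : K) : z^* = z -> Rle 0 (complex.Re z) -> 0 <= z.
Proof.
case: z => a b h1 h2; rewrite lecE /=; apply/andP; split; last by apply/RleP.
have hb : Ropp b = b by case: h1.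
apply/eqP; rewrite /= -R0E; lra.
Qed.

Lemma forall_ord N (P : nat -> Prop) : (forall i : 'I_N, P i) -> forall p, (p < N)%coq_nat -> P p.
Proof. by move=> H p hp; exact: (H (Ordinal (introT ssrnat.ltP hp))). Qed.

Lemma mx_of_psd N g : is_hermitian N g -> is_psd N g ->
  forall r : 'rV_N, 0 <= (r *m mx_of N g *m r^t*) 0 0.
Proof.
move=> hg hpsd r; rewrite -(row_ofK r) -qform_mx; apply: ge0_self_conj; last exact: hpsd.
by rewrite qform_mx quad_self_adjoint // mx_of_hermitian.
Qed.

Lemma psd_sqrt N g : is_hermitian N g -> is_psd N g ->
  exists h, is_hermitian N h /\ is_psd N h /\
   forall p q, (p < N)%coq_nat -> (q < N)%coq_nat ->
     csum N (fun r => Cmult (h p r) (h r q)) = g p q.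
Proof.
move=> hg hpsd.
have [Q [hQ psdQ QQ]] := psd_sqrtmx (mx_of_hermitian hg) (mx_of_psd hg hpsd).
pose h p q := toC (extend (fun i => extend (fun j => Q i j) q) p).
have hQe : forall (i j : 'I_N), ofC (h i j) = Q i j by move=> i j; rewrite /h toCK !extend_val.
have mxh : mx_of N h = Q by apply/matrixP => i j; rewrite mxE hQe.
exists h; split; [|split].
- move=> p q; move: p; apply: forall_ord => i; move: q; apply: forall_ord => j.
  apply: ofC_inj; rewrite ofC_conj !hQe.
  by have := congr1 (fun M : 'M[K]_N => M j i) hQ; rewrite !mxE => <-.
- move=> u; have := psdQ (row_of N u); rewrite -mxh -qform_mx lecE /= => /andP [_ /RleP].
  exact.
- move=> p q; move: p; apply: forall_ord => i; move: q; apply: forall_ord => j.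
  apply: ofC_inj; have := congr1 (fun M : 'M[K]_N => M i j) QQ; rewrite !mxE => <-.
  by rewrite ofC_csum; apply: eq_bigr => r _; rewrite ofC_mul !hQe.
Qed.

Lemma definite_coercive N g : is_hermitian N g -> is_psd N g -> is_definite N g ->
  exists c : R, Rlt 0 c /\ forall u,
    Rle (Rmult c (Coquelicot.Complex.Re (csum N (fun p => Cmult (u p) (Cconj (u p))))))
        (Coquelicot.Complex.Re (qform N g u)).
Proof.
move=> hg hpsd hdef.
have hdefm : forall r : 'rV_N, (r *m mx_of N g *m r^t*) 0 0 = 0 -> r = 0.
  move=> r; rewrite -(row_ofK r) -qform_mx => /(congr1 (@complex.Re _)) /hdef hu.
  rewrite row_ofK; apply/rowP => j; move: (hu j (elimT ssrnat.ltP (ltn_ord j))).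
  rewrite mxE => /(congr1 ofC); rewrite toCK ofC_0 => /(congr1 (@Num.conj _)).
  by rewrite conjCK extend_val conjC0.
have [[c1 c2] cgt0 hc] := pd_coercive (mx_of_hermitian hg) (mx_of_psd hg hpsd) hdefm.
move: cgt0; rewrite ltcE /= => /andP [/eqP c20 /RltP c1gt0].
exists c1; split => // u.
have := hc (row_of N u); rewrite -qform_mx row_of_self lecE /= => /andP [_ /RleP].
by rewrite c20 mul0r subr0.
Qed.

Lemma exists_dependence N (w : nat -> vec) : (forall i p, (N <= p)%coq_nat -> w i p = RtoC 0) ->
  exists c : nat -> C, (exists i, (i <= N)%coq_nat /\ c i <> RtoC 0) /\
   forall p, csum N.+1 (fun i => Cmult (c i) (w i p)) = RtoC 0.
Proof.
move=> hw.
have [r rn0 rW] := row_kernel_nontrivial (\matrix_(i, j) ofC (w i j) : 'M[K]_(N.+1, N)).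
exists (fun i => toC (extend (fun j => r 0 j) i)); split.
- case: (pickP (fun j => r 0 j != 0)) => [j hj | h].
    exists j; split; first by apply/ssrnat.leP; rewrite -ltnS ltn_ord.
    by move=> /(congr1 ofC); rewrite toCK extend_val ofC_0 => e; move: hj; rewrite e eqxx.
  case/negP: rn0; apply/eqP/rowP => j; rewrite mxE.
  by have := h j => /negbFE /eqP.
- move=> p; case: (ltnP p N) => hp.
  + apply: ofC_inj.
    have e := congr1 (fun M : 'M[K]_(1, N) => M 0 (Ordinal hp)) rW; rewrite !mxE in e.
    rewrite ofC_csum ofC_0 -[in RHS]e.
    by apply: eq_bigr => i _; rewrite ofC_mul toCK extend_val mxE.
  + rewrite csum_zero // => i _; rewrite hw; first exact: Cmult_0_r.
    by apply/ssrnat.leP.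
Qed.

End HermitianMatrix.

(** * Square-summable sequences *)

Definition fin_supp (N : nat) (u : vec) : Prop := forall p, (N <= p)%nat -> u p = RtoC 0.
Definition cseries (f : nat -> C) : C := (Series (fun p => Re (f p)), Series (fun p => Im (f p))).
Definition ex_cseries (f : nat -> C) : Prop :=
  ex_series (fun p => Re (f p)) /\ ex_series (fun p => Im (f p)).
Definition unit_vec (j : nat) : vec := fun p => if Nat.eqb p j then RtoC 1 else RtoC 0.

Lemma Pj_supp j u : fin_supp j (Pj j u).
Proof. intros p Hp. unfold Pj. destruct (Nat.ltb_spec p j); auto; lia. Qed.

Lemma qform_Pj N g u : qform N g (Pj N u) = qform N g u.
Proof.
apply csum_ext. intros q Hq. unfold Pj. destruct (Nat.ltb_spec q N); try lia. f_equal.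
apply csum_ext. intros r Hr. destruct (Nat.ltb_spec r N); auto; lia.
Qed.

Section Series.
Local Open Scope R_scope.

Lemma ex_series_0 : ex_series (fun _ : nat => 0).
Proof.
apply ex_series_ext with (fun n => (1/2)^n * 0). intros n; apply Rmult_0_r.
apply ex_series_scal_r, ex_series_geom. rewrite Rabs_pos_eq; lra.
Qed.

Lemma Series_0 : Series (fun _ : nat => 0) = 0.
Proof. rewrite (Series_ext _ (fun n : nat => 0 * 0)) by (intros; ring). rewrite Series_scal_l. ring. Qed.

Lemma Series_split a N : ex_series a -> Series a = rsum N a + Series (fun q => a (N + q)%nat).
Proof.
intros H. destruct N as [|m].
- simpl. rewrite Rplus_0_l. apply Series_ext. reflexivity.
- rewrite (Series_incr_n a (S m)) by (auto; lia). simpl pred. f_equal.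
  clear H. induction m as [|m IH]; simpl in *. ring. rewrite IH. ring.
Qed.

Lemma ex_series_fin a N : (forall p, (N <= p)%nat -> a p = 0) -> ex_series a.
Proof.
intros H. apply (proj2 (ex_series_incr_n a N)).
apply ex_series_ext with (fun _ => 0). intros; rewrite H; auto; lia. apply ex_series_0.
Qed.

Lemma Series_fin a N : (forall p, (N <= p)%nat -> a p = 0) -> Series a = rsum N a.
Proof.
intros H. rewrite (Series_split a N) by (apply ex_series_fin with N; auto).
rewrite (Series_ext _ (fun _ => 0)) by (intros; apply H; lia). rewrite Series_0. ring.
Qed.

Lemma Series_nonneg a : ex_series a -> (forall p, 0 <= a p) -> 0 <= Series a.
Proof. intros H H0. rewrite <- Series_0. apply Series_le; auto. intros; split; auto; lra. Qed.

Lemma Series_term_le a p : ex_series a -> (forall q, 0 <= a q) -> a p <= Series a.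
Proof.
intros H H0. rewrite (Series_split a (S p)) by auto.
assert (a p <= rsum (S p) a) by (apply rsum_term; auto).
assert (0 <= Series (fun q => a (S p + q)%nat)).
{ apply Series_nonneg; auto. apply (ex_series_incr_n a (S p)); auto. }
lra.
Qed.

Lemma Series_eq0_terms a p : ex_series a -> (forall q, 0 <= a q) -> Series a = 0 -> a p = 0.
Proof. intros H H0 H1. pose proof (Series_term_le a p H H0). pose proof (H0 p). lra. Qed.

Lemma Re_mul_conj z : Re (Cmult z (Cconj z)) = Cmod z ^ 2.
Proof. rewrite Cmod2_alt. unfold Re, Im; simpl. ring. Qed.

Lemma l2_fin_supp u N : fin_supp N u -> l2 u.
Proof. intros H. apply ex_series_fin with N. intros p Hp. rewrite H by auto. rewrite Cmod_0. ring. Qed.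

Lemma hnorm_ge0 u : 0 <= hnorm u.
Proof. apply sqrt_pos. Qed.

Lemma hnorm_fin u N : fin_supp N u -> hnorm u = sqrt (rsum N (fun p => Cmod (u p) ^ 2)).
Proof.
intros H. unfold hnorm. f_equal. apply Series_fin. intros p Hp. rewrite H by auto. rewrite Cmod_0. ring.
Qed.

Lemma hnorm2_fin N u : fin_supp N u -> hnorm u ^ 2 = rsum N (fun p => Cmod (u p) ^ 2).
Proof. intros H. rewrite (hnorm_fin u N H). apply pow2_sqrt, rsum_nonneg. intros; apply pow2_ge_0. Qed.

Lemma Cmod_coord_le_hnorm u p : l2 u -> Cmod (u p) <= hnorm u.
Proof.
intros H. unfold hnorm. rewrite <- (sqrt_pow2 (Cmod (u p))) by apply Cmod_ge_0.
apply sqrt_le_1_alt, (Series_term_le (fun q => Cmod (u q) ^ 2) p H). intros; apply pow2_ge_0.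
Qed.

Lemma l2_sub u v : l2 u -> l2 v -> l2 (vsub u v).
Proof.
intros Hu Hv.
apply (@ex_series_le R_AbsRing R_CompleteNormedModule) with
  (fun p => 2 * (Cmod (u p) ^ 2) + 2 * (Cmod (v p) ^ 2)).
- intros p. change (norm (Cmod (vsub u v p) ^ 2)) with (Rabs (Cmod (vsub u v p) ^ 2)).
  rewrite Rabs_pos_eq by apply pow2_ge_0.
  pose proof (Cmod_triangle (u p) (- v p)%C). rewrite Cmod_opp in H.
  pose proof (Cmod_ge_0 (vsub u v p)). pose proof (Cmod_ge_0 (u p)). pose proof (Cmod_ge_0 (v p)).
  unfold vsub, Cminus in *.
  assert (Cmod (u p + - v p)%C * Cmod (u p + - v p)%C <= (Cmod (u p) + Cmod (v p)) * (Cmod (u p) + Cmod (v p)))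
    by (apply Rmult_le_compat; lra).
  pose proof (pow2_ge_0 (Cmod (u p) - Cmod (v p))). simpl. nra.
- apply (@ex_series_plus R_AbsRing R_NormedModule);
    apply (@ex_series_scal_l R_AbsRing R_NormedModule); auto.
Qed.

Lemma im_le_Cmod c : Rabs (Im c) <= Cmod c.
Proof.
unfold Cmod, Im. destruct (sqrt_plus_sqr (fst c) (snd c)) as [H _].
eapply Rle_trans; [apply Rmax_r | exact H].
Qed.

Lemma ex_cseries_inner u v : l2 u -> l2 v -> ex_cseries (fun p => Cmult (u p) (Cconj (v p))).
Proof.
intros Hu Hv.
assert (Hle : forall p (z : R), Rabs z <= Cmod (Cmult (u p) (Cconj (v p))) ->
          norm z <= Cmod (u p) ^ 2 + Cmod (v p) ^ 2).
{ intros p z Hz. change (norm z) with (Rabs z). rewrite Cmod_mult, Cmod_conj in Hz.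
  pose proof (Cmod_ge_0 (u p)). pose proof (Cmod_ge_0 (v p)). nra. }
assert (Hs : ex_series (fun p => Cmod (u p) ^ 2 + Cmod (v p) ^ 2))
  by (apply (@ex_series_plus R_AbsRing R_NormedModule); auto).
split; apply (@ex_series_le R_AbsRing R_CompleteNormedModule) with (2 := Hs); intros p; apply Hle.
- apply re_le_Cmod.
- apply im_le_Cmod.
Qed.

Lemma cseries_split f N : ex_cseries f -> cseries f = Cplus (csum N f) (cseries (fun q => f (N + q)%nat)).
Proof.
intros [H1 H2]. unfold cseries. apply injective_projections; simpl.
- rewrite (Series_split _ N H1), re_csum. reflexivity.
- rewrite (Series_split _ N H2), im_csum. reflexivity.
Qed.

Lemma cseries_ext f g : (forall p, f p = g p) -> cseries f = cseries g.
Proof. intros H. unfold cseries. f_equal; apply Series_ext; intros; rewrite H; auto. Qed.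

Lemma cseries_fin f N : (forall p, (N <= p)%nat -> f p = RtoC 0) -> cseries f = csum N f.
Proof.
intros H. unfold cseries. apply injective_projections; simpl.
- rewrite (Series_fin _ N), re_csum; auto. intros p Hp; rewrite H; auto.
- rewrite (Series_fin _ N), im_csum; auto. intros p Hp; rewrite H; auto.
Qed.

Lemma inner_fin_r u v N : fin_supp N v -> inner u v = csum N (fun p => Cmult (u p) (Cconj (v p))).
Proof.
intros H. apply cseries_fin. intros p Hp. rewrite H by auto.
apply injective_projections; simpl; ring.
Qed.

Lemma inner_fin_l u v N : fin_supp N u -> inner u v = csum N (fun p => Cmult (u p) (Cconj (v p))).
Proof.
intros H. apply cseries_fin. intros p Hp. rewrite H by auto.
apply injective_projections; simpl; ring.
Qed.

Lemma unit_vec_supp j : fin_supp (S j) (unit_vec j).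
Proof. intros p Hp. unfold unit_vec. destruct (Nat.eqb_spec p j); auto; lia. Qed.

Lemma l2_unit_vec j : l2 (unit_vec j).
Proof. apply l2_fin_supp with (S j), unit_vec_supp. Qed.

Lemma inner_unit_vec_l w j : inner (unit_vec j) w = Cconj (w j).
Proof.
rewrite (inner_fin_l _ _ (S j)) by apply unit_vec_supp.
rewrite <- (csum_delta (S j) j (fun q => Cconj (w q))) by lia.
apply csum_ext. intros i Hi. unfold unit_vec.
destruct (Nat.eqb_spec i j); apply injective_projections; simpl; ring.
Qed.

Lemma inner_zero_l w : inner vzero w = RtoC 0.
Proof. rewrite (inner_fin_l _ _ 0). reflexivity. intros p _; reflexivity. Qed.

Lemma inner_zero_r w : inner w vzero = RtoC 0.
Proof. rewrite (inner_fin_r _ _ 0). reflexivity. intros p _; reflexivity. Qed.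

Lemma l2_eq0 u : l2 u -> Re (inner u u) = 0 -> u = vzero.
Proof.
intros H H0. unfold inner, Re at 1 in H0; simpl in H0.
rewrite (Series_ext _ (fun p => Cmod (u p) ^ 2)) in H0 by (intros; apply Re_mul_conj).
apply functional_extensionality. intros p. apply Cmod_eq_0.
pose proof (Series_eq0_terms _ p H (fun q => pow2_ge_0 _) H0). simpl in H1.
pose proof (Cmod_ge_0 (u p)). nra.
Qed.

Lemma Re_csum_sqnorm N (u : vec) :
  Re (csum N (fun p => Cmult (u p) (Cconj (u p)))) = rsum N (fun p => Cmod (u p) ^ 2).
Proof. rewrite re_csum. apply rsum_ext. intros i _. apply Re_mul_conj. Qed.

Lemma Re_minus (a b : C) : Re (Cminus a b) = Re a - Re b.
Proof. destruct a, b. unfold Re. simpl. ring. Qed.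

Lemma rsum_sqnorm_sub N (a b : vec) :
  rsum N (fun p => Cmod (Cminus (a p) (b p)) ^ 2) =
  rsum N (fun p => Cmod (a p) ^ 2) - 2 * Re (csum N (fun p => Cmult (b p) (Cconj (a p))))
  + rsum N (fun p => Cmod (b p) ^ 2).
Proof.
induction N as [|N IH]; cbn [rsum csum]. simpl; ring.
rewrite IH, re_plus, !Cmod2_alt. unfold Re, Im. simpl. ring.
Qed.

Lemma csum_sqnorm_eq0 N (u : vec) : csum N (fun p => Cmult (u p) (Cconj (u p))) = RtoC 0 ->
  forall p, (p < N)%nat -> u p = RtoC 0.
Proof.
intros H p Hp. apply Cmod_eq_0.
assert (E : rsum N (fun p => Cmod (u p) ^ 2) = 0) by (rewrite <- Re_csum_sqnorm, H; reflexivity).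
pose proof (rsum_eq0_terms N _ (fun j _ => pow2_ge_0 _) E p Hp).
pose proof (Cmod_ge_0 (u p)). simpl in *. nra.
Qed.

End Series.

Lemma adj_eq A B : is_adjoint A B -> forall v, l2 v -> adj A v = B v.
Proof.
intros HB v Hv.
assert (Ha : is_adjoint A (adj A)) by (unfold adj; apply epsilon_spec; exists B; auto).
apply functional_extensionality. intros p.
destruct Ha as [_ Ha]. destruct HB as [_ HB].
assert (E : inner (unit_vec p) (adj A v) = inner (unit_vec p) (B v))
  by (rewrite <- Ha, <- HB; auto; apply l2_unit_vec).
rewrite !inner_unit_vec_l in E. rewrite <- (Cconj_conj (adj A v p)), E. apply Cconj_conj.
Qed.

Lemma sqrt_op_spec A D : is_pos_sqrt A D -> is_pos_sqrt A (sqrt_op A).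
Proof. intros H. unfold sqrt_op. apply epsilon_spec. exists D; auto. Qed.

(** * Finite matrices acting on l^2 and their defect spaces *)

Definition mat_op (N : nat) (g : nat -> nat -> C) : op := fun u p =>
  if Nat.ltb p N then csum N (fun q => Cmult (g p q) (u q)) else RtoC 0.

Lemma Cmod_csum_le n (f : nat -> C) : (Cmod (csum n f) <= rsum n (fun i => Cmod (f i)))%R.
Proof. induction n; simpl. rewrite Cmod_0. lra. eapply Rle_trans. apply Cmod_triangle. lra. Qed.

Section MatOp.
Local Open Scope C_scope.
Variables (N : nat) (h : nat -> nat -> C).

Lemma mat_op_supp u : fin_supp N (mat_op N h u).
Proof. intros p Hp. unfold mat_op. destruct (Nat.ltb_spec p N); auto; lia. Qed.

Lemma mat_op_lin : lin_on_l2 (mat_op N h).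
Proof.
intros a b u v _ _. apply functional_extensionality. intros p. unfold mat_op, vadd, vscal.
destruct (Nat.ltb_spec p N).
- rewrite <- !csum_scal_l, <- csum_plus. apply csum_ext. intros; ring.
- ring.
Qed.

Lemma mat_op_mul g u :
  (forall p q, (p < N)%nat -> (q < N)%nat -> csum N (fun r => h p r * h r q) = g p q) ->
  mat_op N h (mat_op N h u) = mat_op N g u.
Proof.
intros H. apply functional_extensionality. intros p. unfold mat_op at 1 3.
destruct (Nat.ltb_spec p N); auto.
rewrite (csum_ext N _ (fun r => csum N (fun q => h p r * h r q * u q))).
2:{ intros r Hr. unfold mat_op. destruct (Nat.ltb_spec r N); try lia.
    rewrite <- csum_scal_l. apply csum_ext; intros; ring. }
rewrite csum_swap. apply csum_ext. intros q Hq. rewrite csum_scal_r, H; auto.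
Qed.

Lemma mat_op_bounded : exists M : R, forall u, l2 u -> (hnorm (mat_op N h u) <= M * hnorm u)%R.
Proof.
set (row p := rsum N (fun q => Cmod (h p q))).
exists (sqrt (rsum N (fun p => row p ^ 2)%R)). intros u Hu.
assert (Hp : forall p, (p < N)%nat -> (Cmod (mat_op N h u p) <= row p * hnorm u)%R).
{ intros p Hp. unfold mat_op. destruct (Nat.ltb_spec p N); try lia.
  eapply Rle_trans. apply Cmod_csum_le. unfold row. rewrite Rmult_comm, <- rsum_scal.
  apply rsum_le. intros q Hq. rewrite Cmod_mult, Rmult_comm.
  apply Rmult_le_compat_r. apply Cmod_ge_0. apply Cmod_coord_le_hnorm; auto. }
rewrite (hnorm_fin _ N) by apply mat_op_supp.
rewrite <- (sqrt_pow2 (hnorm u)) by apply hnorm_ge0. rewrite <- sqrt_mult.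
2:{ apply rsum_nonneg. intros; apply pow2_ge_0. }
2:{ apply pow2_ge_0. }
apply sqrt_le_1_alt. rewrite Rmult_comm, <- rsum_scal.
apply rsum_le. intros p Hp'. specialize (Hp p Hp').
pose proof (Cmod_ge_0 (mat_op N h u p)). nra.
Qed.

Lemma inner_mat_op u v :
  inner (mat_op N h u) v = csum N (fun p => csum N (fun q => h p q * u q) * Cconj (v p)).
Proof.
rewrite (inner_fin_l _ _ N) by apply mat_op_supp. apply csum_ext. intros p Hp.
unfold mat_op. destruct (Nat.ltb_spec p N); auto; lia.
Qed.

Lemma inner_mat_op_self u : inner (mat_op N h u) u = qform N h u.
Proof. apply inner_mat_op. Qed.

Lemma mat_op_self_adjoint u v : is_hermitian N h -> inner (mat_op N h u) v = inner u (mat_op N h v).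
Proof.
intros Hh. rewrite inner_mat_op, (inner_fin_r _ _ N) by apply mat_op_supp.
rewrite (csum_ext N _ (fun p => csum N (fun q => h p q * u q * Cconj (v p))))
  by (intros; symmetry; apply csum_scal_r).
rewrite csum_swap. apply csum_ext. intros q Hq. unfold mat_op.
destruct (Nat.ltb_spec q N); try lia. rewrite csum_conj, <- csum_scal_l.
apply csum_ext. intros p Hp. rewrite Cmult_conj, <- Hh by auto. ring.
Qed.

Lemma mat_op_unit_vec_span (c : vec) :
  vsum N (fun i => vscal (c i) (mat_op N h (unit_vec i))) = mat_op N h c.
Proof.
apply functional_extensionality. intros p. unfold vsum, vscal, mat_op.
destruct (Nat.ltb_spec p N).
- apply csum_ext. intros i Hi.
  rewrite (csum_ext N _ (fun q => if Nat.eqb q i then h p q else 0)).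
  2:{ intros q Hq. unfold unit_vec. destruct (Nat.eqb q i); apply injective_projections; simpl; ring. }
  rewrite csum_delta by auto. apply Cmult_comm.
- apply csum_zero. intros i _. apply Cmult_0_r.
Qed.

End MatOp.

Lemma sqrt_op_mat_op (A : op) N g : is_hermitian N g -> is_psd N g ->
  (forall u, l2 u -> A u = mat_op N g u) -> is_pos_sqrt A (sqrt_op A).
Proof.
intros Hg Hpsd HA. destruct (HermitianMatrix.psd_sqrt Hg Hpsd) as [h [Hh [Hhp Hhh]]].
apply sqrt_op_spec with (mat_op N h).
repeat split.
- intros u _. apply l2_fin_supp with N, mat_op_supp.
- apply mat_op_lin.
- apply mat_op_bounded.
- intros u v _ _. apply mat_op_self_adjoint; auto.
- intros u _. rewrite inner_mat_op_self. apply Hhp.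
- intros u Hu. rewrite HA by auto. apply mat_op_mul; auto.
Qed.

Definition indep (d : nat) (v : nat -> vec) : Prop :=
  forall c : nat -> C, vsum d (fun i => vscal (c i) (v i)) = vzero ->
    forall i, (i < d)%nat -> c i = RtoC 0.

Section Independence.
Local Open Scope C_scope.

Lemma not_indep_fin_supp N m v : (forall i, (i < m)%nat -> fin_supp N (v i)) -> (N < m)%nat ->
  ~ indep m v.
Proof.
intros Hs Hm Hi.
destruct (@HermitianMatrix.exists_dependence N (fun i => if Nat.ltb i m then v i else vzero))
  as [c [[i0 [Hi0 Hc0]] Hc]].
{ intros i p Hp. destruct (Nat.ltb_spec i m). apply Hs; auto. reflexivity. }
set (c' := fun i => if Nat.leb i N then c i else RtoC 0).
assert (E : vsum m (fun i => vscal (c' i) (v i)) = vzero).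
{ apply functional_extensionality; intros p. unfold vsum, vzero.
  replace m with (S N + (m - S N))%nat by lia. rewrite csum_split, (csum_zero (m - S N)).
  - rewrite Cplus_0_r, <- (Hc p). apply csum_ext. intros i Hi2. unfold vscal, c'.
    destruct (Nat.leb_spec i N); try lia. destruct (Nat.ltb_spec i m); try lia. reflexivity.
  - intros i Hi2. unfold vscal, c'. destruct (Nat.leb_spec (S N + i) N); try lia. ring. }
apply Hc0. pose proof (Hi c' E i0 ltac:(lia)) as H. unfold c' in H.
destruct (Nat.leb_spec i0 N); try lia. auto.
Qed.

Lemma indep_snoc N m v w : indep m v ->
  (forall i, (i < m)%nat -> csum N (fun p => v i p * Cconj (w p)) = 0) ->
  (exists p, (p < N)%nat /\ w p <> 0) ->
  indep (S m) (fun i => if Nat.ltb i m then v i else w).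
Proof.
intros Hv Ho [p0 [Hp0 Hwp0]] c Hc.
assert (Hpt : forall p, csum m (fun i => c i * v i p) + c m * w p = 0).
{ intros p. pose proof (f_equal (fun f => f p) Hc) as H. unfold vsum, vzero in H. simpl in H.
  rewrite <- H. f_equal.
  - apply csum_ext; intros i Hi; unfold vscal; destruct (Nat.ltb_spec i m); try lia; auto.
  - unfold vscal. destruct (Nat.ltb_spec m m); try lia. auto. }
set (S0 := csum N (fun p => w p * Cconj (w p))).
assert (HS : c m * S0 = 0).
{ transitivity (csum N (fun p => (csum m (fun i => c i * v i p) + c m * w p) * Cconj (w p))).
  - rewrite (csum_ext N _ (fun p => csum m (fun i => c i * (v i p * Cconj (w p))) + c m * (w p * Cconj (w p)))).
    2:{ intros p _. rewrite Cmult_plus_distr_r, <- csum_scal_r. f_equal. apply csum_ext; intros; ring. ring. }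
    rewrite csum_plus, csum_swap, csum_scal_l, (csum_zero m). fold S0. ring.
    intros i Hi. rewrite csum_scal_l, Ho by auto. ring.
  - apply csum_zero. intros p _. rewrite Hpt. ring. }
assert (Hcm : c m = 0).
{ destruct (Ceq_dec S0 0) as [E|E].
  - exfalso. exact (Hwp0 (csum_sqnorm_eq0 N w E p0 Hp0)).
  - replace (c m) with (c m * S0 * / S0) by (field; auto). rewrite HS. ring. }
assert (Hv0 : vsum m (fun i => vscal (c i) (v i)) = vzero).
{ apply functional_extensionality; intros p. unfold vsum, vzero, vscal.
  pose proof (Hpt p) as H. rewrite Hcm in H. rewrite <- H. ring. }
intros i Hi. destruct (Nat.eq_dec i m). subst; auto. apply Hv; auto. lia.
Qed.

Lemma orth_indep_eq0 N v w : indep N v -> (forall i, (i < N)%nat -> fin_supp N (v i)) ->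
  fin_supp N w -> (forall i, (i < N)%nat -> csum N (fun p => v i p * Cconj (w p)) = 0) ->
  forall p, (p < N)%nat -> w p = 0.
Proof.
intros Hv Hs Hw Ho p Hp. apply NNPP. intros Hwp.
apply (not_indep_fin_supp N (S N) (fun i => if Nat.ltb i N then v i else w)); auto.
- intros i Hi. destruct (Nat.ltb_spec i N); auto.
- apply indep_snoc with N; eauto.
Qed.

Lemma indep_app N a b v w : indep a v -> indep b w ->
  (forall i j, (i < a)%nat -> (j < b)%nat -> inner (w j) (v i) = 0) ->
  (forall j, (j < b)%nat -> fin_supp N (w j)) ->
  indep (a + b) (fun i => if Nat.ltb i a then v i else w (i - a)%nat).
Proof.
intros Hv Hw Ho Hsw c Hc.
set (s := vsum b (fun j => vscal (c (a + j)%nat) (w j))).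
assert (Hpt : forall p, s p = - csum a (fun i => c i * v i p)).
{ intros p. pose proof (f_equal (fun f => f p) Hc) as H. unfold vsum, vzero in H.
  rewrite csum_split in H.
  assert (E : csum a (fun i => c i * v i p) + s p = 0).
  { rewrite <- H. unfold s, vsum, vscal. f_equal; apply csum_ext; intros i Hi.
    - destruct (Nat.ltb_spec i a); try lia; auto.
    - destruct (Nat.ltb_spec (a + i) a); try lia. replace (a + i - a)%nat with i by lia. auto. }
  replace (s p) with (csum a (fun i => c i * v i p) + s p - csum a (fun i => c i * v i p)) by ring.
  rewrite E. ring. }
(* s lies in span(w) and, by Hc, in span(v); these are orthogonal, so s = 0 *)
assert (Hin : forall i, (i < a)%nat -> csum N (fun p => s p * Cconj (v i p)) = 0).
{ intros i Hi. unfold s, vsum, vscal.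
  rewrite (csum_ext N _ (fun p => csum b (fun j => c (a + j)%nat * (w j p * Cconj (v i p))))).
  2:{ intros p _. rewrite <- csum_scal_r. apply csum_ext. intros; ring. }
  rewrite csum_swap. apply csum_zero. intros j Hj.
  rewrite csum_scal_l, <- (inner_fin_l _ _ N), Ho by auto. ring. }
assert (Hs0 : forall p, s p = 0).
{ intros p. destruct (Nat.lt_ge_cases p N) as [Hp|Hp].
  - apply (csum_sqnorm_eq0 N s); auto.
    rewrite (csum_ext N _ (fun p => - csum a (fun i => Cconj (c i) * (s p * Cconj (v i p))))).
    + rewrite csum_opp, csum_swap, (csum_zero a). ring.
      intros i Hi. rewrite csum_scal_l, Hin by auto. ring.
    + intros q _. rewrite (Hpt q) at 2. rewrite Copp_conj, csum_conj.
      transitivity (- (s q * csum a (fun i => Cconj (c i * v i q)))). ring.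
      f_equal. rewrite <- csum_scal_l. apply csum_ext. intros i _. rewrite Cmult_conj. ring.
  - unfold s, vsum. apply csum_zero. intros j Hj. unfold vscal. rewrite (Hsw j Hj p Hp). ring. }
assert (Hb : forall j, (j < b)%nat -> c (a + j)%nat = 0).
{ apply Hw. apply functional_extensionality. intros p. apply (Hs0 p). }
assert (Ha : forall i, (i < a)%nat -> c i = 0).
{ apply Hv. apply functional_extensionality. intros p. unfold vsum, vzero, vscal.
  pose proof (Hpt p) as H. rewrite Hs0 in H.
  transitivity (- (- csum a (fun i => c i * v i p))). ring. rewrite <- H. ring. }
intros i Hi. destruct (Nat.lt_ge_cases i a). auto.
replace i with (a + (i - a))%nat by lia. apply Hb. lia.
Qed.

End Independence.

Lemma Cmod_le_eps_eq0 (z : C) (W : R) : (0 <= W)%R ->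
  (forall eps, (0 < eps)%R -> (Cmod z <= eps * W)%R) -> z = RtoC 0.
Proof.
intros HW H. apply Cmod_eq_0. pose proof (Cmod_ge_0 z).
destruct (Rle_lt_or_eq_dec 0 (Cmod z)) as [Hlt|]; auto.
assert (He : (0 < Cmod z / (2 * (W + 1)))%R) by (apply Rdiv_lt_0_compat; lra).
specialize (H _ He).
assert (Cmod z / (2 * (W + 1)) * W < Cmod z)%R.
{ apply Rlt_le_trans with (Cmod z / (2 * (W + 1)) * (2 * (W + 1)))%R.
  - apply Rmult_lt_compat_l; lra.
  - right. field. lra. }
lra.
Qed.

Section DefectSpace.
Local Open Scope C_scope.
Variables (N : nat) (g : nat -> nat -> C) (A D : op).
Hypothesis HA : forall u, l2 u -> A u = mat_op N g u.
Hypothesis HD : is_pos_sqrt A D.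

Lemma pos_sqrt_eq0 y : l2 y -> Re (inner (A y) y) = 0%R -> D y = vzero.
Proof.
intros Hy H0. destruct HD as [Hl2 [_ [_ [Hsa [_ Hsq]]]]].
apply l2_eq0; auto. rewrite <- Hsa, Hsq; auto.
Qed.

Lemma pos_sqrt_supp u : l2 u -> fin_supp N (D u).
Proof.
intros Hu p Hp. destruct HD as [_ [_ [_ [Hsa _]]]].
assert (E : D (unit_vec p) = vzero).
{ apply pos_sqrt_eq0. apply l2_unit_vec.
  rewrite HA by apply l2_unit_vec. rewrite inner_mat_op_self.
  unfold qform. rewrite csum_zero. reflexivity.
  intros i Hi. unfold unit_vec. destruct (Nat.eqb_spec i p); try lia.
  apply injective_projections; simpl; ring. }
pose proof (Hsa (unit_vec p) u (l2_unit_vec p) Hu) as E2.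
rewrite E, inner_zero_l, inner_unit_vec_l in E2.
rewrite <- (Cconj_conj (D u p)), <- E2. apply injective_projections; simpl; ring.
Qed.

(* D u is orthogonal to ker g since D w = 0 for w in ker g and D is self-adjoint *)
Lemma pos_sqrt_orth_kernel w : fin_supp N w -> Re (qform N g w) = 0%R ->
  forall u, l2 u -> inner (D u) w = 0.
Proof.
intros Hw HQ u Hu. destruct HD as [_ [_ [_ [Hsa _]]]].
assert (Hwl : l2 w) by (apply l2_fin_supp with N; auto).
rewrite Hsa, pos_sqrt_eq0 by (rewrite ?HA, ?inner_mat_op_self; auto). apply inner_zero_r.
Qed.

Lemma closure_range_approx x : closure (range D) x -> forall eps, (0 < eps)%R ->
  exists u, l2 u /\ forall p, (Cmod (x p - D u p) < eps)%R.
Proof.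
intros [Hx Hc] eps He. destruct (Hc eps He) as [y [[u [Hu ->]] Hy]].
exists u. split; auto. intros p. eapply Rle_lt_trans; [|exact Hy].
apply (Cmod_coord_le_hnorm (vsub x (D u))), l2_sub; auto. apply HD; auto.
Qed.

Lemma closure_range_supp x : closure (range D) x -> fin_supp N x.
Proof.
intros Hx p Hp. apply Cmod_le_eps_eq0 with 1%R. lra.
intros eps He. destruct (closure_range_approx x Hx eps He) as [u [Hu Hup]].
specialize (Hup p). rewrite (pos_sqrt_supp u Hu p Hp) in Hup.
replace (x p - 0) with (x p) in Hup by ring. lra.
Qed.

Lemma closure_range_orth_kernel x w : closure (range D) x ->
  fin_supp N w -> Re (qform N g w) = 0%R -> csum N (fun p => x p * Cconj (w p)) = 0.
Proof.
intros Hx Hw HQ. apply Cmod_le_eps_eq0 with (rsum N (fun p => Cmod (w p))).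
{ apply rsum_nonneg; intros; apply Cmod_ge_0. }
intros eps He. destruct (closure_range_approx x Hx eps He) as [u [Hu Hup]].
pose proof (pos_sqrt_orth_kernel w Hw HQ u Hu) as H0. rewrite (inner_fin_r _ _ N Hw) in H0.
replace (csum N (fun p => x p * Cconj (w p)))
  with (csum N (fun p => x p * Cconj (w p) - D u p * Cconj (w p))) by (rewrite csum_minus, H0; ring).
rewrite (csum_ext N _ (fun p => (x p - D u p) * Cconj (w p))) by (intros; ring).
eapply Rle_trans. apply Cmod_csum_le. rewrite <- rsum_scal. apply rsum_le. intros p Hp.
rewrite Cmod_mult, Cmod_conj. apply Rmult_le_compat_r. apply Cmod_ge_0. left; apply Hup.
Qed.

Lemma definite_of_indep_closure v : indep N v ->
  (forall i, (i < N)%nat -> closure (range D) (v i)) -> is_definite N g.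
Proof.
intros Hv Hin u HQ p Hp.
assert (E : Pj N u p = 0).
{ apply (orth_indep_eq0 N v); auto using Pj_supp.
  - intros i Hi. apply closure_range_supp, Hin; auto.
  - intros i Hi. apply closure_range_orth_kernel; auto using Pj_supp. rewrite qform_Pj; auto. }
unfold Pj in E. destruct (Nat.ltb_spec p N); auto; lia.
Qed.

End DefectSpace.

(** * The operators T and F_1 in coordinates *)

Section Coordinates.
Variables (n k : nat) (X : nat -> nat -> C).
Local Open Scope C_scope.

(* Coordinates are 0-based, so [xmat i p] is x^(i+1)_(p+1).  The -1 entries of F
   cancel S_k P_n: F_1 is the (n+k) x n matrix [xmat], and T = F_1 + S_k (I - P_n). *)
Definition xmat i p := X (S i) (S p).
Definition F1_coord (u : vec) : vec := fun p =>
  if Nat.ltb p (n + k) then csum n (fun i => u i * xmat i p) else 0.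
Definition T_coord (u : vec) : vec := fun p =>
  if Nat.ltb p (n + k) then csum n (fun i => u i * xmat i p) else u (p - k)%nat.
Definition F1_adj (v : vec) : vec := fun i =>
  if Nat.ltb i n then csum (n + k) (fun p => Cconj (xmat i p) * v p) else 0.
Definition T_adj (v : vec) : vec := fun i =>
  if Nat.ltb i n then csum (n + k) (fun p => Cconj (xmat i p) * v p) else v (i + k)%nat.
(* the matrices of I - T*T (on the first n coordinates) and I - TT* (on the first n+k) *)
Definition defect_mx p q :=
  (if Nat.eqb p q then 1 else 0) - csum (n + k) (fun r => Cconj (xmat p r) * xmat q r).
Definition defect_star_mx p q :=
  (if Nat.eqb p q then 1 else 0) - csum n (fun i => xmat i p * Cconj (xmat i q)).

Lemma Fop_coord u p : Fop n k X u p =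
  if Nat.ltb p (n + k)
  then csum n (fun i => u i * xmat i p) - (if Nat.ltb p k then 0 else u (p - k)%nat)
  else 0.
Proof.
unfold Fop. destruct (Nat.ltb_spec p (n + k)); auto.
replace (if Nat.ltb p k then RtoC 0 else u (p - k)%nat)
  with (csum n (fun i => u i * (if Nat.eqb p (i + k) then 1 else 0))).
- rewrite <- csum_minus. apply csum_ext. intros i Hi.
  unfold xmat. destruct (Nat.eqb p (i + k)); ring.
- destruct (Nat.ltb_spec p k).
  + apply csum_zero. intros i Hi. destruct (Nat.eqb_spec p (i + k)). lia. ring.
  + rewrite <- (csum_delta n (p - k) u) by lia. apply csum_ext. intros i Hi.
    destruct (Nat.eqb_spec p (i + k)); destruct (Nat.eqb_spec i (p - k)); try lia; ring.
Qed.

Lemma F1op_coord : F1op n k X = F1_coord.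
Proof.
do 2 (apply functional_extensionality; intro). unfold F1op, vadd, F1_coord, Sk, Pj.
rewrite Fop_coord. destruct (Nat.ltb_spec x0 (n + k)); destruct (Nat.ltb_spec x0 k);
try destruct (Nat.ltb_spec (x0 - k) n); try lia; ring.
Qed.

Lemma Top_coord : Top n k X = T_coord.
Proof.
do 2 (apply functional_extensionality; intro). unfold Top, vadd, T_coord, Sk.
rewrite Fop_coord. destruct (Nat.ltb_spec x0 (n + k)); destruct (Nat.ltb_spec x0 k); try lia; ring.
Qed.

Lemma T_coord_split u : T_coord u = vadd (F1_coord u) (Sk k (vsub u (Pj n u))).
Proof.
apply functional_extensionality. intros p. unfold T_coord, F1_coord, vadd, Sk, vsub, Pj.
destruct (Nat.ltb_spec p (n + k)); destruct (Nat.ltb_spec p k);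
try destruct (Nat.ltb_spec (p - k) n); try lia; ring.
Qed.

Lemma F1_coord_supp u : fin_supp (n + k) (F1_coord u).
Proof. intros p Hp. unfold F1_coord. destruct (Nat.ltb_spec p (n + k)); auto; lia. Qed.

Lemma F1_adj_supp v : fin_supp n (F1_adj v).
Proof. intros p Hp. unfold F1_adj. destruct (Nat.ltb_spec p n); auto; lia. Qed.

Lemma F1_coord_local (u u' : vec) : (forall q, (q < n)%nat -> u q = u' q) ->
  F1_coord u = F1_coord u'.
Proof.
intros H. apply functional_extensionality. intros p. unfold F1_coord.
destruct (Nat.ltb_spec p (n + k)); auto. apply csum_ext. intros i Hi. rewrite H; auto.
Qed.

Lemma csum_F1_coord_adj u v :
  csum (n + k) (fun p => F1_coord u p * Cconj (v p)) = csum n (fun i => u i * Cconj (F1_adj v i)).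
Proof.
rewrite (csum_ext (n + k) _ (fun p => csum n (fun i => u i * xmat i p * Cconj (v p)))).
2:{ intros p Hp. unfold F1_coord. destruct (Nat.ltb_spec p (n + k)); try lia.
    rewrite <- csum_scal_r. auto. }
rewrite csum_swap. apply csum_ext. intros i Hi. unfold F1_adj.
destruct (Nat.ltb_spec i n); try lia. rewrite csum_conj, <- csum_scal_l.
apply csum_ext. intros p Hp. rewrite Cmult_conj, Cconj_conj. ring.
Qed.

Lemma F1_is_adjoint : is_adjoint (F1op n k X) F1_adj.
Proof.
split.
- intros u _. apply l2_fin_supp with n, F1_adj_supp.
- intros u v Hu Hv. rewrite F1op_coord.
  rewrite (inner_fin_l _ _ (n + k)) by apply F1_coord_supp.
  rewrite (inner_fin_r _ _ n) by apply F1_adj_supp.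
  apply csum_F1_coord_adj.
Qed.

Lemma l2_T_coord u : l2 u -> l2 (T_coord u).
Proof.
intros Hu. apply (proj2 (ex_series_incr_n _ (n + k))).
apply (proj1 (ex_series_incr_n _ n)) in Hu.
eapply ex_series_ext; [|exact Hu]. intros q. simpl. unfold T_coord.
destruct (Nat.ltb_spec (n + k + q) (n + k)); try lia.
replace (n + k + q - k)%nat with (n + q)%nat by lia. reflexivity.
Qed.

Lemma l2_T_adj v : l2 v -> l2 (T_adj v).
Proof.
intros Hv. apply (proj2 (ex_series_incr_n _ n)).
apply (proj1 (ex_series_incr_n _ (n + k))) in Hv.
eapply ex_series_ext; [|exact Hv]. intros q. simpl. unfold T_adj.
destruct (Nat.ltb_spec (n + q) n); try lia.
replace (n + q + k)%nat with (n + k + q)%nat by lia. reflexivity.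
Qed.

Lemma T_is_adjoint : is_adjoint (Top n k X) T_adj.
Proof.
split; [apply l2_T_adj|]. intros u v Hu Hv. rewrite Top_coord.
unfold inner. fold (cseries (fun p => T_coord u p * Cconj (v p))).
fold (cseries (fun p => u p * Cconj (T_adj v p))).
rewrite (cseries_split (fun p => T_coord u p * Cconj (v p)) (n + k))
  by (apply ex_cseries_inner; auto; apply l2_T_coord; auto).
rewrite (cseries_split (fun p => u p * Cconj (T_adj v p)) n)
  by (apply ex_cseries_inner; auto; apply l2_T_adj; auto).
f_equal.
- rewrite (csum_ext (n + k) _ (fun p => F1_coord u p * Cconj (v p))).
  2:{ intros p Hp. unfold T_coord, F1_coord. destruct (Nat.ltb_spec p (n + k)); try lia. auto. }
  rewrite csum_F1_coord_adj. apply csum_ext. intros i Hi. unfold T_adj, F1_adj.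
  destruct (Nat.ltb_spec i n); try lia. auto.
- apply cseries_ext. intros q. unfold T_coord, T_adj.
  destruct (Nat.ltb_spec (n + k + q) (n + k)); try lia.
  destruct (Nat.ltb_spec (n + q) n); try lia.
  replace (n + k + q - k)%nat with (n + q)%nat by lia.
  replace (n + q + k)%nat with (n + k + q)%nat by lia. auto.
Qed.

Lemma defect_mx_row u p : (p < n)%nat ->
  csum n (fun q => defect_mx p q * u q) = u p - F1_adj (F1_coord u) p.
Proof.
intros Hp. unfold F1_adj. destruct (Nat.ltb_spec p n); try lia.
rewrite (csum_ext n _ (fun q => (if Nat.eqb q p then u q else 0) -
           csum (n + k) (fun r => Cconj (xmat p r) * xmat q r * u q))).
2:{ intros q Hq. unfold defect_mx. rewrite Nat.eqb_sym, csum_scal_r. destruct (Nat.eqb q p); ring. }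
rewrite csum_minus, csum_delta by auto. f_equal.
rewrite csum_swap. apply csum_ext. intros r Hr. unfold F1_coord.
destruct (Nat.ltb_spec r (n + k)); try lia. rewrite <- csum_scal_l.
apply csum_ext. intros q Hq. ring.
Qed.

Lemma defect_star_mx_row u p : (p < n + k)%nat ->
  csum (n + k) (fun q => defect_star_mx p q * u q) = u p - F1_coord (F1_adj u) p.
Proof.
intros Hp. unfold F1_coord. destruct (Nat.ltb_spec p (n + k)); try lia.
rewrite (csum_ext (n + k) _ (fun q => (if Nat.eqb q p then u q else 0) -
           csum n (fun i => xmat i p * Cconj (xmat i q) * u q))).
2:{ intros q Hq. unfold defect_star_mx. rewrite Nat.eqb_sym, csum_scal_r. destruct (Nat.eqb q p); ring. }
rewrite csum_minus, csum_delta by auto. f_equal.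
rewrite csum_swap. apply csum_ext. intros i Hi. unfold F1_adj.
destruct (Nat.ltb_spec i n); try lia. rewrite <- csum_scal_r.
apply csum_ext. intros q Hq. ring.
Qed.

Lemma defect_op_sq_mat u : l2 u -> vsub u (adj (Top n k X) (Top n k X u)) = mat_op n defect_mx u.
Proof.
intros Hu. rewrite (adj_eq _ _ T_is_adjoint) by (rewrite Top_coord; apply l2_T_coord; auto).
rewrite Top_coord. apply functional_extensionality. intros p. unfold vsub, mat_op.
destruct (Nat.ltb_spec p n).
- rewrite defect_mx_row by auto. unfold T_adj, F1_adj. destruct (Nat.ltb_spec p n); try lia. f_equal.
  apply csum_ext. intros r Hr. unfold T_coord, F1_coord. destruct (Nat.ltb_spec r (n + k)); try lia. auto.
- unfold T_adj. destruct (Nat.ltb_spec p n); try lia. unfold T_coord.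
  destruct (Nat.ltb_spec (p + k) (n + k)); try lia.
  replace (p + k - k)%nat with p by lia. ring.
Qed.

Lemma defect_star_op_sq_mat u : l2 u ->
  vsub u (Top n k X (adj (Top n k X) u)) = mat_op (n + k) defect_star_mx u.
Proof.
intros Hu. rewrite (adj_eq _ _ T_is_adjoint) by auto.
rewrite Top_coord. apply functional_extensionality. intros p. unfold vsub, mat_op.
destruct (Nat.ltb_spec p (n + k)).
- rewrite defect_star_mx_row by auto. unfold T_coord, F1_coord.
  destruct (Nat.ltb_spec p (n + k)); try lia. f_equal.
  apply csum_ext. intros i Hi. unfold T_adj, F1_adj. destruct (Nat.ltb_spec i n); try lia. auto.
- unfold T_coord. destruct (Nat.ltb_spec p (n + k)); try lia. unfold T_adj.
  destruct (Nat.ltb_spec (p - k) n); try lia.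
  replace (p - k + k)%nat with p by lia. ring.
Qed.

Lemma defect_mx_hermitian : is_hermitian n defect_mx.
Proof.
intros p q Hp Hq. unfold defect_mx. rewrite Cminus_conj, csum_conj. f_equal.
- rewrite Nat.eqb_sym. destruct (Nat.eqb p q); apply injective_projections; simpl; ring.
- apply csum_ext. intros r Hr. rewrite Cmult_conj, Cconj_conj. ring.
Qed.

Lemma defect_star_mx_hermitian : is_hermitian (n + k) defect_star_mx.
Proof.
intros p q Hp Hq. unfold defect_star_mx. rewrite Cminus_conj, csum_conj. f_equal.
- rewrite Nat.eqb_sym. destruct (Nat.eqb p q); apply injective_projections; simpl; ring.
- apply csum_ext. intros r Hr. rewrite Cmult_conj, Cconj_conj. ring.
Qed.

Lemma qform_defect_mx u : qform n defect_mx u =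
  csum n (fun p => u p * Cconj (u p)) - csum (n + k) (fun r => F1_coord u r * Cconj (F1_coord u r)).
Proof.
unfold qform. rewrite (csum_ext n _ (fun p => u p * Cconj (u p) -
  csum (n + k) (fun r => F1_coord u r * (Cconj (xmat p r) * Cconj (u p))))).
2:{ intros p Hp. rewrite defect_mx_row by auto. unfold F1_adj.
    destruct (Nat.ltb_spec p n); try lia.
    transitivity (u p * Cconj (u p) - csum (n + k) (fun r => Cconj (xmat p r) * F1_coord u r) * Cconj (u p)).
    ring. rewrite <- csum_scal_r. f_equal. apply csum_ext. intros; ring. }
rewrite csum_minus, csum_swap. f_equal. apply csum_ext. intros r Hr.
rewrite csum_scal_l. f_equal. unfold F1_coord. destruct (Nat.ltb_spec r (n + k)); try lia.
rewrite csum_conj. apply csum_ext. intros i Hi. rewrite Cmult_conj. ring.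
Qed.

Lemma qform_defect_star_mx u : qform (n + k) defect_star_mx u =
  csum (n + k) (fun p => u p * Cconj (u p)) - csum n (fun i => F1_adj u i * Cconj (F1_adj u i)).
Proof.
unfold qform.
rewrite (csum_ext (n + k) _ (fun p => u p * Cconj (u p) - F1_coord (F1_adj u) p * Cconj (u p))).
2:{ intros p Hp. rewrite defect_star_mx_row by auto. ring. }
rewrite csum_minus, csum_F1_coord_adj. reflexivity.
Qed.

End Coordinates.

Section Contraction.
Variables (n k : nat) (X : nat -> nat -> C).
Hypothesis Hc : contraction (Top n k X).
Local Open Scope C_scope.

Lemma F1_coord_contractive w : fin_supp n w ->
  (rsum (n + k) (fun p => Cmod (F1_coord n k X w p) ^ 2) <= rsum n (fun p => Cmod (w p) ^ 2))%R.
Proof.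
intros H. destruct Hc as [_ [_ Hn]].
pose proof (Hn w (l2_fin_supp w n H)) as Hw.
assert (E : Top n k X w = F1_coord n k X w).
{ rewrite Top_coord. apply functional_extensionality. intros p. unfold T_coord, F1_coord.
  destruct (Nat.ltb_spec p (n + k)); auto. apply H. lia. }
rewrite E in Hw. rewrite <- (hnorm2_fin _ _ H), <- (hnorm2_fin _ _ (F1_coord_supp n k X w)).
pose proof (hnorm_ge0 (F1_coord n k X w)). nra.
Qed.

Lemma defect_mx_psd : is_psd n (defect_mx n k X).
Proof.
intros u. rewrite <- qform_Pj, qform_defect_mx, Re_minus, !Re_csum_sqnorm.
pose proof (F1_coord_contractive (Pj n u) (Pj_supp n u)). lra.
Qed.

(* with y = P_(n+k) u and z = F_1* y: 0 <= |y - F_1 z|^2 = |y|^2 - 2|z|^2 + |F_1 z|^2,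
   and |F_1 z| <= |z| *)
Lemma defect_star_mx_psd : is_psd (n + k) (defect_star_mx n X).
Proof.
intros u. rewrite <- qform_Pj, qform_defect_star_mx, Re_minus, !Re_csum_sqnorm.
set (y := Pj (n + k) u). set (z := F1_adj n k X y).
pose proof (defect_mx_psd z) as Hz. rewrite qform_defect_mx, Re_minus, !Re_csum_sqnorm in Hz.
pose proof (rsum_nonneg (n + k) (fun p => Cmod (y p - F1_coord n k X z p) ^ 2)%R
  (fun _ _ => pow2_ge_0 _)) as H0.
rewrite rsum_sqnorm_sub, csum_F1_coord_adj, Re_csum_sqnorm in H0. fold z in H0. lra.
Qed.

Lemma defect_op_pos_sqrt :
  is_pos_sqrt (fun u => vsub u (adj (Top n k X) (Top n k X u))) (defect_op (Top n k X)).
Proof.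
apply (sqrt_op_mat_op _ n (defect_mx n k X)).
- apply defect_mx_hermitian.
- apply defect_mx_psd.
- apply defect_op_sq_mat.
Qed.

Lemma defect_star_op_pos_sqrt :
  is_pos_sqrt (fun u => vsub u (Top n k X (adj (Top n k X) u))) (defect_op_star (Top n k X)).
Proof.
apply (sqrt_op_mat_op _ (n + k) (defect_star_mx n X)).
- apply defect_star_mx_hermitian.
- apply defect_star_mx_psd.
- apply defect_star_op_sq_mat.
Qed.

Lemma defect_mx_definite : has_dim (defect_sp (Top n k X)) n -> is_definite n (defect_mx n k X).
Proof.
intros [v [Hv [Hvi _]]].
exact (definite_of_indep_closure _ _ _ _ (defect_op_sq_mat n k X) defect_op_pos_sqrt v Hvi Hv).
Qed.

Lemma defect_star_mx_definite :
  subsp (defect_sp (Top n k X)) (defect_sp_star (Top n k X)) ->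
  has_dim (defect_sp (Top n k X)) n ->
  has_dim (ominus (defect_sp_star (Top n k X)) (defect_sp (Top n k X))) k ->
  is_definite (n + k) (defect_star_mx n X).
Proof.
intros Hsub [v [Hv [Hvi _]]] [w [Hw [Hwi _]]].
pose proof (closure_range_supp _ _ _ _ (defect_star_op_sq_mat n k X) defect_star_op_pos_sqrt)
  as Hsupp.
apply (definite_of_indep_closure _ _ _ _ (defect_star_op_sq_mat n k X) defect_star_op_pos_sqrt
        (fun i => if Nat.ltb i n then v i else w (i - n)%nat)).
- apply (indep_app (n + k)); auto.
  + intros i j Hi Hj. apply (proj2 (Hw j Hj)), Hv; auto.
  + intros j Hj. apply Hsupp, Hw; auto.
- intros i Hi. destruct (Nat.ltb_spec i n).
  + apply Hsub, Hv; auto.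
  + apply Hw. lia.
Qed.

End Contraction.

(** * The powers F_r *)

Section PowerFormula.
Variables (n k : nat) (X : nat -> nat -> C).
Local Open Scope C_scope.

Lemma Sk_vadd (a b : vec) : Sk k (vadd a b) = vadd (Sk k a) (Sk k b).
Proof.
apply functional_extensionality. intros p. unfold Sk, vadd. destruct (Nat.ltb_spec p k); auto. ring.
Qed.

Lemma Sk_vsum m (f : nat -> vec) : Sk k (vsum m f) = vsum m (fun i => Sk k (f i)).
Proof.
apply functional_extensionality. intros p. unfold Sk, vsum. destruct (Nat.ltb_spec p k); auto.
symmetry. apply csum_zero. auto.
Qed.

Lemma iter_Sk_low j (w : vec) : (forall q, (q < n)%nat -> w q = 0) ->
  forall q, (q < n)%nat -> Nat.iter j (Sk k) w q = 0.
Proof.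
intros H. induction j as [|j IH]; intros q Hq. apply H; auto.
simpl. unfold Sk. destruct (Nat.ltb_spec q k); auto. apply IH. lia.
Qed.

Definition F1_pow_high (u : vec) m :=
  vsub (Nat.iter m (F1_coord n k X) u) (Pj n (Nat.iter m (F1_coord n k X) u)).
Definition Frop_tail (u : vec) r :=
  vsum (r - 1) (fun j => Nat.iter (S j) (Sk k) (F1_pow_high u (r - S j))).

Lemma Frop_split r u : Frop n k X r u = vadd (Nat.iter r (F1_coord n k X) u) (Frop_tail u r).
Proof. unfold Frop. rewrite F1op_coord. reflexivity. Qed.

Lemma Frop_tail_low u r q : (q < n)%nat -> Frop_tail u r q = 0.
Proof.
intros Hq. apply csum_zero. intros j _. apply iter_Sk_low; auto.
intros q' Hq'. unfold F1_pow_high, vsub, Pj. destruct (Nat.ltb_spec q' n); try lia. ring.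
Qed.

Lemma Frop_tail_succ u r : (1 <= r)%nat ->
  Frop_tail u (S r) = vadd (Sk k (F1_pow_high u r)) (Sk k (Frop_tail u r)).
Proof.
intros Hr. apply functional_extensionality. intros p.
unfold Frop_tail at 1, vsum. simpl (S r - 1)%nat. rewrite Nat.sub_0_r.
replace r with (1 + (r - 1))%nat at 1 by lia. rewrite csum_split. simpl csum at 1.
unfold vadd. rewrite Cplus_0_l, Nat.sub_0_r. f_equal.
unfold Frop_tail. rewrite Sk_vsum. reflexivity.
Qed.

(* F_1 only reads the first n coordinates, where the tail vanishes *)
Lemma Frop_succ r u : (1 <= r)%nat -> Frop n k X (S r) u = T_coord n k X (Frop n k X r u).
Proof.
intros Hr. rewrite !Frop_split, T_coord_split.
set (Y := vadd (Nat.iter r (F1_coord n k X) u) (Frop_tail u r)).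
assert (E1 : F1_coord n k X Y = Nat.iter (S r) (F1_coord n k X) u).
{ apply F1_coord_local. intros q Hq. unfold Y, vadd. rewrite Frop_tail_low by auto. apply Cplus_0_r. }
assert (E2 : vsub Y (Pj n Y) = vadd (F1_pow_high u r) (Frop_tail u r)).
{ apply functional_extensionality. intros p. unfold Y, F1_pow_high, vsub, vadd, Pj.
  destruct (Nat.ltb_spec p n); [rewrite Frop_tail_low by auto|]; ring. }
rewrite E1, E2, Sk_vadd, Frop_tail_succ by auto. reflexivity.
Qed.

Lemma Frop_T_pow r u : (1 <= r)%nat -> Frop n k X r u = Nat.iter r (T_coord n k X) (Pj n u).
Proof.
intros Hr. induction r as [|[|r] IH]; try lia.
- simpl. rewrite T_coord_split, Frop_split. unfold Frop_tail. simpl.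
  rewrite (F1_coord_local _ _ _ (Pj n u) u) by (intros q Hq; unfold Pj; destruct (Nat.ltb_spec q n); auto; lia).
  apply functional_extensionality. intros p. unfold vadd, vsum, Sk, vsub, Pj. simpl.
  destruct (Nat.ltb_spec p k); try ring. destruct (Nat.ltb_spec (p - k) n); ring.
- rewrite Frop_succ, IH by lia. reflexivity.
Qed.

End PowerFormula.

Lemma inner_Pj j u z : inner (Pj j u) z = inner u (Pj j z).
Proof.
rewrite (inner_fin_l _ _ j), (inner_fin_r _ _ j) by apply Pj_supp.
apply csum_ext. intros p Hp. unfold Pj. destruct (Nat.ltb_spec p j); auto; lia.
Qed.

Lemma Pj_ext j (u v : vec) : (forall p, (p < j)%nat -> u p = v p) -> Pj j u = Pj j v.
Proof.
intros H. apply functional_extensionality. intros p. unfold Pj.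
destruct (Nat.ltb_spec p j); auto.
Qed.

Lemma hnorm_Pj_le j u : l2 u -> (hnorm (Pj j u) <= hnorm u)%R.
Proof.
intros Hu. unfold hnorm at 2. rewrite (hnorm_fin _ j (Pj_supp j u)).
apply sqrt_le_1_alt. rewrite (Series_split _ j Hu).
rewrite (rsum_ext j _ (fun p => Cmod (u p) ^ 2)%R)
  by (intros p Hp; unfold Pj; destruct (Nat.ltb_spec p j); auto; lia).
assert (0 <= Series (fun q => Cmod (u (j + q)%nat) ^ 2))%R.
{ apply Series_nonneg. apply (ex_series_incr_n (fun q => Cmod (u q) ^ 2)%R j); auto.
  intros; apply pow2_ge_0. }
lra.
Qed.

Section AdjointPowers.
Variables (n k : nat) (X : nat -> nat -> C).
Local Open Scope C_scope.

Lemma l2_iter_T_coord r w : l2 w -> l2 (Nat.iter r (T_coord n k X) w).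
Proof. apply Nat.iter_invariant, l2_T_coord. Qed.

Lemma inner_iter_T_coord r w v : l2 w -> l2 v ->
  inner (Nat.iter r (T_coord n k X) w) v = inner w (Nat.iter r (T_adj n k X) v).
Proof.
intros Hw. revert v. induction r as [|r IH]; intros v Hv; simpl; auto.
destruct (T_is_adjoint n k X) as [_ Ha]. rewrite Top_coord in Ha.
rewrite Ha, IH, Nat.iter_swap by (auto using l2_T_adj, l2_iter_T_coord). reflexivity.
Qed.

Lemma Frop_is_adjoint r : (1 <= r)%nat ->
  is_adjoint (Frop n k X r) (fun v => Pj n (Nat.iter r (T_adj n k X) v)).
Proof.
intros Hr. split.
- intros u _. apply l2_fin_supp with n, Pj_supp.
- intros u v Hu Hv. assert (Hp : l2 (Pj n u)) by (apply l2_fin_supp with n, Pj_supp).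
  rewrite Frop_T_pow, inner_iter_T_coord, inner_Pj by auto. reflexivity.
Qed.

Lemma T_adj_local N (v v' : vec) : (n <= N)%nat -> (forall q, (q < N + k)%nat -> v q = v' q) ->
  forall i, (i < N)%nat -> T_adj n k X v i = T_adj n k X v' i.
Proof.
intros HN H i Hi. unfold T_adj. destruct (Nat.ltb_spec i n).
- apply csum_ext. intros p Hp. rewrite H by lia. reflexivity.
- apply H. lia.
Qed.

Lemma iter_T_adj_local r : forall N (v v' : vec), (n <= N)%nat ->
  (forall q, (q < N + k * r)%nat -> v q = v' q) ->
  forall i, (i < N)%nat -> Nat.iter r (T_adj n k X) v i = Nat.iter r (T_adj n k X) v' i.
Proof.
induction r as [|r IH]; intros N v v' HN H i Hi.
- apply H. lia.
- rewrite !Nat.iter_succ. apply (T_adj_local N); auto. intros q Hq.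
  apply (IH (N + k)%nat); try lia. intros q' Hq'. apply H. nia.
Qed.

End AdjointPowers.

Section Conclusions.
Variables (n k : nat) (X : nat -> nat -> C).
Local Open Scope C_scope.

Lemma adj_F1op x : l2 x -> adj (F1op n k X) x = F1_adj n k X x.
Proof. apply adj_eq, F1_is_adjoint. Qed.

Lemma F1_defect_mat u : l2 u ->
  vsub (Pj n u) (adj (F1op n k X) (F1op n k X u)) = mat_op n (defect_mx n k X) u.
Proof.
intros Hu. rewrite adj_F1op by (rewrite F1op_coord; apply l2_fin_supp with (n + k)%nat, F1_coord_supp).
rewrite F1op_coord. apply functional_extensionality. intros p. unfold vsub, Pj, mat_op.
destruct (Nat.ltb_spec p n).
- rewrite defect_mx_row by auto. reflexivity.
- unfold F1_adj. destruct (Nat.ltb_spec p n); try lia. apply injective_projections; simpl; ring.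
Qed.

Lemma range_F1_defect_dim : is_definite n (defect_mx n k X) ->
  has_dim (range (fun u => vsub (Pj n u) (adj (F1op n k X) (F1op n k X u)))) n.
Proof.
intros Hdef. exists (fun i => mat_op n (defect_mx n k X) (unit_vec i)). split; [|split].
- intros i Hi. exists (unit_vec i). split; [apply l2_unit_vec|].
  rewrite F1_defect_mat; auto. apply l2_unit_vec.
- intros c Hcz i Hi. rewrite mat_op_unit_vec_span in Hcz.
  apply (Hdef c); auto. rewrite <- inner_mat_op_self, Hcz, inner_zero_l. reflexivity.
- intros y [u [Hu ->]]. exists u. rewrite F1_defect_mat by auto. symmetry. apply mat_op_unit_vec_span.
Qed.

Lemma F1op_high_eq0 u : F1op n k X (vsub u (Pj n u)) = vzero.
Proof.
rewrite F1op_coord. apply functional_extensionality. intros p. unfold F1_coord, vzero.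
destruct (Nat.ltb_spec p (n + k)); auto. apply csum_zero. intros i Hi.
unfold vsub, Pj. destruct (Nat.ltb_spec i n); try lia. apply injective_projections; simpl; ring.
Qed.

Lemma F1op_range_low u : vsub (F1op n k X u) (Pj (n + k) (F1op n k X u)) = vzero.
Proof.
rewrite F1op_coord. apply functional_extensionality. intros p. unfold vsub, Pj, vzero.
destruct (Nat.ltb_spec p (n + k)).
- apply injective_projections; simpl; ring.
- rewrite (F1_coord_supp n k X u p) by lia. apply injective_projections; simpl; ring.
Qed.

Lemma iter_T_adj_shift r (x : vec) : ((1 <= r)%nat -> forall q, (q < n + k * r)%nat -> x q = 0) ->
  forall j, (j <= r)%nat -> Nat.iter j (T_adj n k X) x = fun i => x (i + k * j)%nat.
Proof.
intros Hx j. induction j as [|j IH]; intros Hj.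
- apply functional_extensionality. intros i. rewrite Nat.mul_0_r, Nat.add_0_r. reflexivity.
- rewrite Nat.iter_succ, IH by lia. specialize (Hx ltac:(lia)).
  assert (Hkj : (k * S j <= k * r)%nat) by (apply Nat.mul_le_mono_l; lia).
  apply functional_extensionality. intros i. unfold T_adj.
  destruct (Nat.ltb_spec i n).
  + rewrite (Hx (i + k * S j)%nat) by lia. apply csum_zero. intros p Hp.
    rewrite Hx by lia. apply Cmult_0_r.
  + f_equal. rewrite Nat.mul_succ_r. lia.
Qed.

Lemma Frop_adj_norm_eq_vanish r x : is_definite (n + k) (defect_star_mx n X) -> l2 x ->
  ((1 <= r)%nat -> forall q, (q < n + k * r)%nat -> x q = 0) ->
  hnorm (adj (Frop n k X (S r)) x) = hnorm (Pj (n + k * S r) x) ->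
  forall q, (q < n + k * S r)%nat -> x q = 0.
Proof.
intros Hdef Hl Hx Heq.
rewrite (adj_eq _ _ (Frop_is_adjoint n k X (S r) ltac:(lia))) in Heq by auto.
rewrite Nat.iter_succ, (iter_T_adj_shift r x Hx r (le_n r)) in Heq.
set (y := fun i => x (i + k * r)%nat) in *.
assert (E : Pj n (T_adj n k X y) = F1_adj n k X y).
{ apply functional_extensionality. intros p. unfold Pj, T_adj, F1_adj. destruct (Nat.ltb_spec p n); auto. }
rewrite E in Heq.
assert (E2 : (hnorm (F1_adj n k X y) ^ 2 = hnorm (Pj (n + k * S r) x) ^ 2)%R) by (rewrite Heq; auto).
rewrite (hnorm2_fin n _ (F1_adj_supp n k X y)), (hnorm2_fin _ _ (Pj_supp _ x)) in E2.
replace (n + k * S r)%nat with (k * r + (n + k))%nat in E2 by (rewrite Nat.mul_succ_r; lia).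
rewrite rsum_split, (rsum_zero (k * r)) in E2.
2:{ intros q Hq. unfold Pj. destruct (Nat.ltb_spec q (k * r + (n + k))); try lia.
    rewrite Hx by nia. rewrite Cmod_0. ring. }
rewrite (rsum_ext (n + k)%nat _ (fun j => Cmod (y j) ^ 2)%R) in E2.
2:{ intros j Hj. unfold Pj, y. destruct (Nat.ltb_spec (k * r + j) (k * r + (n + k))); try lia.
    rewrite Nat.add_comm. reflexivity. }
assert (HQ : Re (qform (n + k) (defect_star_mx n X) y) = 0%R)
  by (rewrite qform_defect_star_mx, Re_minus, !Re_csum_sqnorm; lra).
intros q Hq. destruct (Nat.lt_ge_cases q (k * r)).
- apply Hx; nia.
- pose proof (Hdef y HQ (q - k * r)%nat ltac:(rewrite Nat.mul_succ_r in Hq; lia)) as H1.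
  unfold y in H1. replace (q - k * r + k * r)%nat with q in H1 by lia. auto.
Qed.

Lemma Frop_equality_trivial x : (1 <= k)%nat -> is_definite (n + k) (defect_star_mx n X) -> l2 x ->
  (forall r, (1 <= r)%nat ->
     hnorm (Frop n k X r x) = hnorm (Pj n x) /\
     hnorm (adj (Frop n k X r) x) = hnorm (Pj (n + k * r) x)) ->
  x = vzero.
Proof.
intros hk Hdef Hl H.
assert (Hvan : forall r q, (q < n + k * S r)%nat -> x q = 0).
{ induction r as [|r IH].
  - apply (Frop_adj_norm_eq_vanish 0); auto. lia. apply (H 1%nat); lia.
  - apply (Frop_adj_norm_eq_vanish (S r)); auto. apply (H (S (S r))); lia. }
apply functional_extensionality. intros q. apply (Hvan q). nia.
Qed.

Hypothesis Hc : contraction (Top n k X).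

Lemma F1_defect_inequality : is_definite (n + k) (defect_star_mx n X) ->
  exists lam : R, (0 <= lam)%R /\ forall x, l2 x ->
    (lam * hnorm (adj (F1op n k X) x) ^ 2 - hnorm (F1op n k X x) ^ 2
     <= lam * hnorm (Pj (n + k) x) ^ 2 - hnorm (Pj n x) ^ 2)%R.
Proof.
intros Hdef.
destruct (HermitianMatrix.definite_coercive (defect_star_mx_hermitian n k X)
            (defect_star_mx_psd n k X Hc) Hdef) as [c [Hc0 Hcb]].
exists (/ c)%R. split; [left; apply Rinv_0_lt_compat; auto|].
intros x Hx. specialize (Hcb x).
rewrite qform_defect_star_mx, Re_minus, !Re_csum_sqnorm in Hcb.
rewrite adj_F1op, F1op_coord by auto.
rewrite (hnorm2_fin n _ (F1_adj_supp n k X x)), (hnorm2_fin (n + k)%nat _ (F1_coord_supp n k X x)),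
  (hnorm2_fin (n + k)%nat _ (Pj_supp (n + k)%nat x)), (hnorm2_fin n _ (Pj_supp n x)).
rewrite (rsum_ext (n + k)%nat (fun p => Cmod (Pj (n + k) x p) ^ 2)%R (fun p => Cmod (x p) ^ 2)%R)
  by (intros p Hp; unfold Pj; destruct (Nat.ltb_spec p (n + k)); auto; lia).
rewrite (rsum_ext n (fun p => Cmod (Pj n x p) ^ 2)%R (fun p => Cmod (x p) ^ 2)%R)
  by (intros p Hp; unfold Pj; destruct (Nat.ltb_spec p n); auto; lia).
set (d := rsum (n + k) (fun p => Cmod (x p) ^ 2)%R) in *.
set (a := rsum n (fun p => Cmod (F1_adj n k X x p) ^ 2)%R) in *.
pose proof (rsum_nonneg (n + k)%nat (fun p => Cmod (F1_coord n k X x p) ^ 2)%R (fun _ _ => pow2_ge_0 _)).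
assert (rsum n (fun p => Cmod (x p) ^ 2) <= d)%R by (apply rsum_mono; [lia | intros; apply pow2_ge_0]).
assert (d <= / c * (d - a))%R.
{ replace d with (/ c * (c * d))%R at 1 by (field; lra).
  apply Rmult_le_compat_l; [left; apply Rinv_0_lt_compat|]; lra. }
nra.
Qed.

Lemma iter_T_coord_contractive r w : l2 w -> (hnorm (Nat.iter r (T_coord n k X) w) <= hnorm w)%R.
Proof.
intros Hw. induction r as [|r IH]; simpl. lra.
destruct Hc as [_ [_ Hn]]. rewrite Top_coord in Hn.
eapply Rle_trans; [apply Hn, l2_iter_T_coord; auto | auto].
Qed.

Lemma T_adj_contractive_fin N z : (n + k <= N)%nat -> fin_supp N z ->
  fin_supp N (T_adj n k X z) /\ (hnorm (T_adj n k X z) <= hnorm z)%R.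
Proof.
intros HN Hz.
assert (Hs : fin_supp N (T_adj n k X z)).
{ intros i Hi. unfold T_adj. destruct (Nat.ltb_spec i n); try lia. apply Hz. lia. }
split; auto.
rewrite (hnorm_fin _ N Hs), (hnorm_fin _ N Hz). apply sqrt_le_1_alt.
pose proof (defect_star_mx_psd n k X Hc z) as Hp.
rewrite qform_defect_star_mx, Re_minus, !Re_csum_sqnorm in Hp.
set (M := (N - n - k)%nat).
replace N with (n + (M + k))%nat at 1 by (unfold M; lia).
rewrite rsum_split, rsum_split, (rsum_zero k), Rplus_0_r.
- replace N with (n + k + M)%nat by (unfold M; lia). rewrite rsum_split.
  assert (E1 : rsum n (fun i => Cmod (T_adj n k X z i) ^ 2)%R
             = rsum n (fun i => Cmod (F1_adj n k X z i) ^ 2)%R).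
  { apply rsum_ext. intros i Hi. unfold T_adj, F1_adj. destruct (Nat.ltb_spec i n); try lia. reflexivity. }
  assert (E2 : rsum M (fun i => Cmod (T_adj n k X z (n + i)%nat) ^ 2)%R
             = rsum M (fun i => Cmod (z (n + k + i)%nat) ^ 2)%R).
  { apply rsum_ext. intros i Hi. unfold T_adj. destruct (Nat.ltb_spec (n + i) n); try lia.
    do 3 f_equal. lia. }
  lra.
- intros i Hi. unfold T_adj. destruct (Nat.ltb_spec (n + (M + i)) n); try lia.
  rewrite Hz by (unfold M; lia). rewrite Cmod_0. ring.
Qed.

Lemma iter_T_adj_contractive_fin r N z : (n + k <= N)%nat -> fin_supp N z ->
  (hnorm (Nat.iter r (T_adj n k X) z) <= hnorm z)%R.
Proof.
intros HN Hz.
enough (H : fin_supp N (Nat.iter r (T_adj n k X) z) /\ (hnorm (Nat.iter r (T_adj n k X) z) <= hnorm z)%R)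
  by apply H.
induction r as [|r [Hs Hle]]; simpl; [split; auto; lra|].
destruct (T_adj_contractive_fin N _ HN Hs). split; auto; lra.
Qed.

Lemma Frop_contractive r x : (1 <= r)%nat -> l2 x ->
  (hnorm (Frop n k X r x) <= hnorm (Pj n x))%R /\
  (hnorm (adj (Frop n k X r) x) <= hnorm (Pj (n + k * r) x))%R.
Proof.
intros Hr Hx. split.
- rewrite Frop_T_pow by auto. apply iter_T_coord_contractive, l2_fin_supp with n, Pj_supp.
- rewrite (adj_eq _ _ (Frop_is_adjoint n k X r Hr)) by auto.
  set (N := (n + k * r)%nat).
  assert (E : Pj n (Nat.iter r (T_adj n k X) x) = Pj n (Nat.iter r (T_adj n k X) (Pj N x))).
  { apply Pj_ext. apply (iter_T_adj_local n k X r n); auto. intros q Hq. unfold Pj, N.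
    destruct (Nat.ltb_spec q (n + k * r)); auto; lia. }
  rewrite E. eapply Rle_trans; [apply hnorm_Pj_le|].
  + apply Nat.iter_invariant. apply l2_T_adj. apply l2_fin_supp with N, Pj_supp.
  + apply iter_T_adj_contractive_fin with N. unfold N; nia. apply Pj_supp.
Qed.

End Conclusions.

Theorem proposition3p1 (n k : nat) (X : nat -> nat -> C) :
  (1 <= k)%nat ->
  contraction (Top n k X) ->
  cnu (Top n k X) ->
  (exists d, has_dim (defect_sp (Top n k X)) d) ->
  (exists d, has_dim (defect_sp_star (Top n k X)) d) ->
  subsp (defect_sp (Top n k X)) (defect_sp_star (Top n k X)) ->
  has_dim (defect_sp (Top n k X)) n ->
  has_dim (ominus (defect_sp_star (Top n k X)) (defect_sp (Top n k X))) k ->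
  (* (1) *)
  has_dim (range (fun u => vsub (Pj n u) (adj (F1op n k X) (F1op n k X u)))) n /\
  (* (2) *)
  (forall u, l2 u ->
     F1op n k X (vsub u (Pj n u)) = vzero /\
     vsub (F1op n k X u) (Pj (n + k) (F1op n k X u)) = vzero) /\
  (* (3) *)
  (exists lam : R, (0 <= lam)%R /\
     forall x, l2 x ->
       (lam * hnorm (adj (F1op n k X) x) ^ 2 - hnorm (F1op n k X x) ^ 2
        <= lam * hnorm (Pj (n + k) x) ^ 2 - hnorm (Pj n x) ^ 2)%R) /\
  (* (4) *)
  (forall r x, (1 <= r)%nat -> l2 x ->
     (hnorm (Frop n k X r x) <= hnorm (Pj n x))%R /\
     (hnorm (adj (Frop n k X r) x) <= hnorm (Pj (n + k * r) x))%R) /\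
  (forall x, l2 x ->
     (forall r, (1 <= r)%nat ->
        hnorm (Frop n k X r x) = hnorm (Pj n x) /\
        hnorm (adj (Frop n k X r) x) = hnorm (Pj (n + k * r) x)) ->
     x = vzero).
Proof.
intros hk Hc _ _ _ Hsub HdT Hom.
pose proof (defect_mx_definite n k X Hc HdT) as Hdef.
pose proof (defect_star_mx_definite n k X Hc Hsub HdT Hom) as Hdef_star.
split; [|split; [|split; [|split]]].
- apply range_F1_defect_dim; auto.
- intros u _. split; [apply F1op_high_eq0 | apply F1op_range_low].
- apply F1_defect_inequality; auto.
- intros r x Hr Hx. apply Frop_contractive; auto.
- intros x Hx. apply Frop_equality_trivial; auto.
Qed.
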